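(* Let $n,k$ be positive integers with $\gcd(n,k)=1$. (a) Let $N=3n+k$ and suppose $n+k\neq N/2$. Then the geometric realization of $C(n,n,n+k)$ is homeomorphic to a cylinder if $N$ is even and to a Möbius band if $N$ is odd. (b) Let $N=3n+2k$. Then the geometric realization of $C(n,n+k,n+k)$ is homeomorphic to a cylinder if $N$ is even and to a Möbius band if $N$ is odd.
   Context: For positive integers $n_1\le n_2\le n_3$ with $N=n_1+n_2+n_3$, $C(n_1,n_2,n_3)$ denotes the abstract simplicial complex whose vertex set is $\mathbb{Z}/N$, whose 2-simplices are all sets of the form $\{k,k+n_1,k+n_1+n_2\}$ or $\{k,k-n_1,k-n_1-n_2\}$ for $k\in\mathbb{Z}/N$ (the orbit of $\{0,n_1,n_1+n_2\}$ under translations and inversions of $\mathbb{Z}/N$), and whose 1-simplices are all sets $\{k,k+n_i\}$ with $k\in\mathbb{Z}/N$, $i\in\{1,2,3\}$. Cylinder means $S^1\times[0,1]$. *)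

From Stdlib Require Import Reals Lra Lia Arith.
Open Scope R_scope.

(* Points of R^m are encoded as functions nat -> R vanishing at indices >= m. *)
Definition Rpoint := nat -> R.

Fixpoint sumR (m : nat) (x : Rpoint) : R :=
  match m with O => 0 | S m' => sumR m' x + x m' end.

(* sup-distance on the first m coordinates (induces the Euclidean topology) *)
Fixpoint dist (m : nat) (x y : Rpoint) : R :=
  match m with O => 0 | S m' => Rmax (dist m' x y) (Rabs (x m' - y m')) end.

Definition subspace (m : nat) (A : Rpoint -> Prop) : Prop :=
  forall x, A x -> forall i, (m <= i)%nat -> x i = 0.

Definition cont_on (m p : nat) (A : Rpoint -> Prop) (f : Rpoint -> Rpoint) : Prop :=
  forall x, A x -> forall eps, 0 < eps -> exists delta, 0 < delta /\
    forall y, A y -> dist m x y < delta -> dist p (f x) (f y) < eps.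

Definition homeomorphic (m : nat) (A : Rpoint -> Prop) (p : nat) (B : Rpoint -> Prop) : Prop :=
  exists (f g : Rpoint -> Rpoint),
    (forall x, A x -> B (f x)) /\ (forall y, B y -> A (g y)) /\
    (forall x, A x -> g (f x) = x) /\ (forall y, B y -> f (g y) = y) /\
    cont_on m p A f /\ cont_on p m B g.

(* The vertex set Z/N is {0,...,N-1}, arithmetic mod N.
   A point is in the geometric realization of C(n1,n2,n3) (as a subset of R^N,
   barycentric coordinates) iff its coordinates are nonnegative, sum to 1,
   and its support is contained in a simplex of C(n1,n2,n3). *)
Definition in_simplex (n1 n2 n3 : nat) (S : nat -> Prop) : Prop :=
  let N := (n1 + n2 + n3)%nat in
  exists k, (k < N)%nat /\
   ( (forall i, S i -> i = k \/ i = ((k + n1) mod N)%nat \/ i = ((k + n1 + n2) mod N)%nat)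
  \/ (forall i, S i -> i = k \/ i = ((k + N - n1) mod N)%nat \/ i = ((k + N - n1 - n2) mod N)%nat)
  \/ (forall i, S i -> i = k \/ i = ((k + n1) mod N)%nat)
  \/ (forall i, S i -> i = k \/ i = ((k + n2) mod N)%nat)
  \/ (forall i, S i -> i = k \/ i = ((k + n3) mod N)%nat) ).

Definition realization (n1 n2 n3 : nat) : Rpoint -> Prop :=
  fun x => let N := (n1 + n2 + n3)%nat in
    (forall i, (N <= i)%nat -> x i = 0) /\
    (forall i, 0 <= x i) /\
    sumR N x = 1 /\
    in_simplex n1 n2 n3 (fun i => (i < N)%nat /\ x i <> 0).

Definition cylinder : Rpoint -> Prop :=
  fun x => (forall i, (3 <= i)%nat -> x i = 0) /\
    (x 0%nat)^2 + (x 1%nat)^2 = 1 /\ 0 <= x 2%nat <= 1.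

Definition mobius_band : Rpoint -> Prop :=
  fun x => (forall i, (3 <= i)%nat -> x i = 0) /\
    exists theta s, 0 <= theta <= 2 * PI /\ -(1/2) <= s <= 1/2 /\
      x 0%nat = (1 + s * cos (theta / 2)) * cos theta /\
      x 1%nat = (1 + s * cos (theta / 2)) * sin theta /\
      x 2%nat = s * sin (theta / 2).

From Pilot Require Import Defs.
From Stdlib Require Import Reals Lra Lia Arith ZArith ClassicalEpsilon FunctionalExtensionality.
Open Scope R_scope.

(* Write d = n in case (a) and d = n + k in case (b); d is invertible mod N because
   gcd(n, k) = 1.  Every simplex of C lies in a triangle {a, a+d, a+2d}, so
   multiplying the vertex labels by d^-1 identifies the realization of C with that
   of the zigzag complex on Z/N, whose triangles are {i, i+1, i+2}.  The zigzag
   complex is the quotient of the strip R x [0,1], triangulated with vertices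
   (q, q mod 2), by the deck map (u, h) |-> (u + N, h) for N even and
   (u + N, 1 - h) for N odd, i.e. a cylinder resp. a Möbius band.  Concretely, the
   strip is mapped onto the cylinder or the embedded Möbius band by a
   deck-invariant map that is injective on a fundamental domain, and its inverse
   is read off from barycentric coordinates. *)

(* The Reals library exports its own [dist]. *)
Local Notation dist := Defs.dist.

Lemma dist_nonneg m x y : 0 <= dist m x y.
Proof.
  induction m as [|m IHm]; simpl; [lra|].
  apply Rle_trans with (1 := IHm); apply Rmax_l.
Qed.

Lemma dist_coord_le m x y i : (i < m)%nat -> Rabs (x i - y i) <= dist m x y.
Proof.
  induction m as [|m IHm]; intros Hi; [lia|]; simpl.
  destruct (Nat.eq_dec i m) as [->|Hne]; [apply Rmax_r|].
  apply Rle_trans with (2 := Rmax_l _ _); apply IHm; lia.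
Qed.

Lemma dist_le_intro m x y d : 0 <= d ->
  (forall i, (i < m)%nat -> Rabs (x i - y i) <= d) -> dist m x y <= d.
Proof.
  intros Hd; induction m as [|m IHm]; intros H; simpl; [lra|].
  apply Rmax_lub; [apply IHm; intros; apply H; lia | apply H; lia].
Qed.

Lemma dist_lt_intro m x y d : 0 < d ->
  (forall i, (i < m)%nat -> Rabs (x i - y i) < d) -> dist m x y < d.
Proof.
  intros Hd; induction m as [|m IHm]; intros H; simpl; [lra|].
  apply Rmax_lub_lt; [apply IHm; intros; apply H; lia | apply H; lia].
Qed.

Lemma homeomorphic_trans m A p B q C :
  homeomorphic m A p B -> homeomorphic p B q C -> homeomorphic m A q C.
Proof.
  intros [f1 [g1 [H1 [H2 [H3 [H4 [H5 H6]]]]]]] [f2 [g2 [K1 [K2 [K3 [K4 [K5 K6]]]]]]].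
  exists (fun x => f2 (f1 x)), (fun z => g1 (g2 z)).
  split; [|split; [|split; [|split; [|split]]]].
  - auto.
  - auto.
  - intros x Hx; rewrite K3 by auto; auto.
  - intros z Hz; rewrite H4 by auto; auto.
  - intros x Hx eps He.
    destruct (K5 (f1 x) (H1 x Hx) eps He) as [d1 [Hd1 Hd1']].
    destruct (H5 x Hx d1 Hd1) as [d2 [Hd2 Hd2']].
    exists d2; split; auto.
  - intros z Hz eps He.
    destruct (H6 (g2 z) (K2 z Hz) eps He) as [d1 [Hd1 Hd1']].
    destruct (K6 z Hz d1 Hd1) as [d2 [Hd2 Hd2']].
    exists d2; split; auto.
Qed.

Lemma homeomorphic_ext_l m (A A' : Rpoint -> Prop) p B : (forall x, A x <-> A' x) ->
  homeomorphic m A p B -> homeomorphic m A' p B.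
Proof.
  intros E [f [g [H1 [H2 [H3 [H4 [H5 H6]]]]]]]. exists f, g.
  split; [|split; [|split; [|split; [|split]]]].
  - intros x Hx; apply H1, E; auto.
  - intros y Hy; apply E, H2; auto.
  - intros x Hx; apply H3, E; auto.
  - auto.
  - intros x Hx eps He. destruct (H5 x (proj2 (E x) Hx) eps He) as [d [Hd Hd']].
    exists d; split; auto. intros y Hy; apply Hd', E; auto.
  - auto.
Qed.

Lemma sumR_zero N x : (forall j, (j < N)%nat -> x j = 0) -> sumR N x = 0.
Proof.
  intros H. assert (G : forall m, (m <= N)%nat -> sumR m x = 0).
  { intros m; induction m; intros Hm; simpl; [lra|]. rewrite IHm, H by lia. lra. }
  apply G; lia.
Qed.

Lemma sumR_support N x : sumR N x = 1 -> exists j, (j < N)%nat /\ x j <> 0.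
Proof.
  intros Hs. destruct (Classical_Prop.classic (exists j, (j < N)%nat /\ x j <> 0)) as [H|H]; auto.
  exfalso. assert (sumR N x = 0); [|lra].
  apply sumR_zero. intros j Hj. destruct (Req_EM_T (x j) 0); auto. exfalso; eauto.
Qed.

Lemma sumR_three N x a b c : (a < N)%nat -> (b < N)%nat -> (c < N)%nat ->
  (a <> b)%nat -> (a <> c)%nat -> (b <> c)%nat ->
  (forall j, (j < N)%nat -> x j <> 0 -> j = a \/ j = b \/ j = c) ->
  sumR N x = x a + x b + x c.
Proof.
  intros Ha Hb Hc Hab Hac Hbc Hx.
  assert (G : forall m, (m <= N)%nat -> sumR m x =
    (if (a <? m)%nat then x a else 0) + (if (b <? m)%nat then x b else 0)
    + (if (c <? m)%nat then x c else 0)).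
  { intros m; induction m; intros Hm; [simpl; lra|]. simpl sumR. rewrite IHm by lia.
    assert (Hxm : (m <> a /\ m <> b /\ m <> c)%nat -> x m = 0).
    { intros (? & ? & ?). destruct (Req_EM_T (x m) 0) as [E|E]; auto.
      destruct (Hx m ltac:(lia) E) as [?|[?|?]]; lia. }
    destruct (Nat.eq_dec m a); [|destruct (Nat.eq_dec m b); [|destruct (Nat.eq_dec m c)]];
      [| | | rewrite Hxm by auto]; subst;
      repeat match goal with |- context [Nat.ltb ?x ?y] =>
        destruct (Nat.ltb_spec x y); try (exfalso; lia) end; lra. }
  rewrite G by lia.
  repeat match goal with |- context [Nat.ltb ?x ?y] => destruct (Nat.ltb_spec x y); try lia end; lra.
Qed.

Lemma mod_bound N y : (0 < N)%nat -> (y mod N < N)%nat.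
Proof. intros; apply Nat.mod_upper_bound; lia. Qed.

Lemma mod_add_modulus N y : ((y + N) mod N = y mod N)%nat.
Proof. rewrite <- (Nat.mul_1_l N) at 1. apply Nat.Div0.mod_add. Qed.

Lemma mod_add_modulus_l N L r : ((L + N + r) mod N = (L + r) mod N)%nat.
Proof. replace (L + N + r)%nat with ((L + r) + N)%nat by lia. apply mod_add_modulus. Qed.

Lemma mod_cases_2N N y : (0 < N)%nat -> (y < 2 * N)%nat ->
  ((y < N)%nat /\ y mod N = y) \/ ((N <= y)%nat /\ y mod N = (y - N)%nat).
Proof.
  intros H0 H. destruct (Nat.lt_ge_cases y N).
  - left; split; auto; apply Nat.mod_small; auto.
  - right; split; auto. replace y with ((y - N) + N)%nat at 1 by lia.
    rewrite mod_add_modulus. apply Nat.mod_small; lia.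
Qed.

Lemma mod_cases_3N N y : (0 < N)%nat -> (y < 3 * N)%nat ->
  ((y < N)%nat /\ y mod N = y) \/ ((N <= y < 2 * N)%nat /\ y mod N = (y - N)%nat)
  \/ ((2 * N <= y)%nat /\ y mod N = (y - 2 * N)%nat).
Proof.
  intros H0 H. destruct (Nat.lt_ge_cases y (2 * N)).
  - destruct (mod_cases_2N N y H0 H1) as [[? ?]|[? ?]]; [left|right; left]; split; auto; lia.
  - right; right; split; auto. replace y with ((y - 2 * N) + 2 * N)%nat at 1 by lia.
    rewrite Nat.Div0.mod_add. apply Nat.mod_small; lia.
Qed.

Lemma mod_neq_add N a r : (0 < r < N)%nat -> (a mod N <> (a + r) mod N)%nat.
Proof.
  intros Hr Heq. rewrite <- Nat.Div0.add_mod_idemp_l in Heq.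
  assert (Hm := mod_bound N a ltac:(lia)).
  destruct (mod_cases_2N N (a mod N + r) ltac:(lia) ltac:(lia)) as [[? E]|[? E]]; lia.
Qed.

Lemma mod_neq_add2 N a r s : (r < s < r + N)%nat -> ((a + r) mod N <> (a + s) mod N)%nat.
Proof. intros H. replace (a + s)%nat with ((a + r) + (s - r))%nat by lia. apply mod_neq_add; lia. Qed.

(** * The zigzag triangulation of the strip *)

(* The strip [R x [0,1]] is triangulated with vertices [(q, parity q)], q in nat,
   and triangles [{q, q+1, q+2}]. *)
Definition parity (q : nat) : R := if Nat.even q then 0 else 1.

Lemma parity_01 p : parity p = 0 \/ parity p = 1.
Proof. unfold parity; destruct (Nat.even p); auto. Qed.

Lemma parity_S p : parity (S p) = 1 - parity p.
Proof.
  unfold parity. rewrite Nat.even_succ, <- Nat.negb_even.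
  destruct (Nat.even p); simpl; lra.
Qed.

Lemma parity_add1 p : parity (p + 1) = 1 - parity p.
Proof. rewrite Nat.add_1_r; apply parity_S. Qed.

Lemma parity_add2 p : parity (p + 2) = parity p.
Proof. replace (p + 2)%nat with (S (S p)) by lia. rewrite !parity_S. lra. Qed.

Definition flip_if (b : bool) (h : R) : R := if b then 1 - h else h.

Lemma parity_add N p : parity (p + N) = flip_if (Nat.odd N) (parity p).
Proof.
  induction N as [|N IHN].
  - rewrite Nat.add_0_r; reflexivity.
  - replace (p + S N)%nat with (S (p + N)) by lia. rewrite parity_S, IHN.
    unfold flip_if. rewrite Nat.odd_succ, <- Nat.negb_odd. destruct (Nat.odd N); simpl; lra.
Qed.

Lemma flip_if_dist b x y : Rabs (flip_if b x - flip_if b y) = Rabs (x - y).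
Proof.
  unfold flip_if; destruct b; [|reflexivity].
  replace (1 - x - (1 - y)) with (- (x - y)) by ring. apply Rabs_Ropp.
Qed.

(* [tent (u - q) |h - parity q|] is the hat function of the vertex q: it is 1 at
   [(q, parity q)], 0 at every other vertex, and affine on each triangle. *)
Definition tent (t w : R) : R := Rmax 0 (Rmin (1 - w) (1 - (Rabs t + w) / 2)).
Definition hat (q : nat) (u h : R) : R := tent (u - INR q) (Rabs (h - parity q)).

Lemma tent_nonneg t w : 0 <= tent t w.
Proof. apply Rmax_l. Qed.

Lemma tent_eq_0 t w A : Rabs t = A -> 0 <= w -> 2 <= A + w -> tent t w = 0.
Proof.
  intros <- ? ?. unfold tent. apply Rmax_left.
  apply Rle_trans with (1 - (Rabs t + w) / 2); [apply Rmin_r | lra].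
Qed.

Lemma tent_eq_min t w A : Rabs t = A -> 0 <= w <= 1 -> A + w <= 2 ->
  tent t w = Rmin (1 - w) (1 - (A + w) / 2).
Proof. intros <- ? ?. unfold tent. apply Rmax_right. apply Rmin_glb; lra. Qed.

Lemma Rabs_eq_pm x y : (x = y \/ x = - y) -> 0 <= y -> Rabs x = y.
Proof.
  intros [-> | ->] H; [|rewrite Rabs_Ropp]; apply Rabs_pos_eq; auto.
Qed.

Definition in_strip_tri (p : nat) (u h a b c : R) : Prop :=
  0 <= a /\ 0 <= b /\ 0 <= c /\ a + b + c = 1 /\
  u = a * INR p + b * INR (p + 1) + c * INR (p + 2) /\
  h = a * parity p + b * parity (p + 1) + c * parity (p + 2).

Definition tri_coord (p q : nat) (a b c : R) : R :=
  if Nat.eqb q p then a else if Nat.eqb q (p + 1) then b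
  else if Nat.eqb q (p + 2) then c else 0.

Lemma in_strip_tri_u p u h a b c : in_strip_tri p u h a b c -> u = INR p + b + 2 * c.
Proof.
  intros (_ & _ & _ & Hs & Hu & _). rewrite Hu, !plus_INR. simpl INR.
  replace a with (1 - b - c) by lra. ring.
Qed.

Lemma in_strip_tri_h p u h a b c : in_strip_tri p u h a b c ->
  Rabs (h - parity p) = b /\ Rabs (h - parity (p + 1)) = a + c.
Proof.
  intros (Ha & Hb & Hc & Hs & _ & Hh). rewrite parity_add1, parity_add2 in *.
  split; apply Rabs_eq_pm; try lra; destruct (parity_01 p) as [E|E]; rewrite E in *;
    [left | right | right | left]; lra.
Qed.

Lemma in_strip_tri_h_bounds p u h a b c : in_strip_tri p u h a b c -> 0 <= h <= 1.
Proof.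
  intros (Ha & Hb & Hc & Hs & Hu & Hh). rewrite parity_add1, parity_add2 in Hh.
  destruct (parity_01 p) as [E|E]; rewrite E in Hh; nra.
Qed.

Lemma hat_vertex p u h a b c : in_strip_tri p u h a b c ->
  hat p u h = a /\ hat (p + 1) u h = b /\ hat (p + 2) u h = c.
Proof.
  intros HT. assert (Hu := in_strip_tri_u _ _ _ _ _ _ HT).
  destruct (in_strip_tri_h _ _ _ _ _ _ HT) as [H0 H1].
  destruct HT as (Ha & Hb & Hc & Hs & _). unfold hat.
  rewrite !plus_INR, parity_add2, H0, H1. simpl INR. split; [|split].
  - rewrite (tent_eq_min _ _ (b + 2 * c)) by (try (apply Rabs_eq_pm; [left|]); lra).
    rewrite Rmin_right; lra.
  - destruct (Rle_lt_dec 0 (u - (INR p + 1))).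
    + rewrite (tent_eq_min _ _ (u - (INR p + 1))) by (try (apply Rabs_eq_pm; [left|]); lra).
      rewrite Rmin_left; lra.
    + rewrite (tent_eq_min _ _ (- (u - (INR p + 1)))) by (try (apply Rabs_eq_pm; [right|]); lra).
      rewrite Rmin_left; lra.
  - rewrite (tent_eq_min _ _ (2 * a + b)) by (try (apply Rabs_eq_pm; [right|]); lra).
    rewrite Rmin_right; lra.
Qed.

Lemma hat_off p u h a b c q : in_strip_tri p u h a b c ->
  q <> p -> q <> (p + 1)%nat -> q <> (p + 2)%nat -> hat q u h = 0.
Proof.
  intros HT Hq0 Hq1 Hq2. assert (Hu := in_strip_tri_u _ _ _ _ _ _ HT).
  assert (Hh := in_strip_tri_h_bounds _ _ _ _ _ _ HT).
  destruct (in_strip_tri_h _ _ _ _ _ _ HT) as [H0 H1].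
  destruct HT as (Ha & Hb & Hc & Hs & _). unfold hat.
  assert (Hw := Rabs_pos (h - parity q)).
  destruct (Nat.lt_ge_cases q p) as [Hlt|Hge].
  - destruct (Nat.eq_dec (q + 1) p) as [Hq|Hq].
    + subst p. rewrite parity_add1 in H0. rewrite !plus_INR in Hu. simpl INR in Hu.
      assert (E : Rabs (h - parity q) = 1 - b).
      { revert H0. destruct (parity_01 q) as [E|E]; rewrite E; unfold Rabs;
          repeat destruct Rcase_abs; lra. }
      rewrite E. apply (tent_eq_0 _ _ (1 + b + 2 * c)); [apply Rabs_eq_pm; [left|]| |]; lra.
    + assert (INR q + 2 <= INR p).
      { replace p with ((q + 2) + (p - q - 2))%nat by lia.
        rewrite !plus_INR; simpl INR; pose proof (pos_INR (p - q - 2)); lra. }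
      apply (tent_eq_0 _ _ (u - INR q)); [apply Rabs_eq_pm; [left|]| |]; lra.
  - destruct (Nat.eq_dec q (p + 3)) as [Hq|Hq].
    + subst q. rewrite plus_INR. simpl INR.
      replace (parity (p + 3)) with (parity (p + 1))
        by (replace (p + 3)%nat with ((p + 1) + 2)%nat by lia; symmetry; apply parity_add2).
      assert (E : Rabs (h - parity (p + 1)) = 1 - b).
      { revert H0 H1. rewrite parity_add1. destruct (parity_01 p) as [E|E]; rewrite E;
          unfold Rabs; repeat destruct Rcase_abs; lra. }
      rewrite E. apply (tent_eq_0 _ _ (3 - b - 2 * c)); [apply Rabs_eq_pm; [right|]| |]; lra.
    + assert (INR p + 4 <= INR q).
      { replace q with ((p + 4) + (q - p - 4))%nat by lia.
        rewrite !plus_INR; simpl INR; pose proof (pos_INR (q - p - 4)); lra. }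
      apply (tent_eq_0 _ _ (INR q - u)); [apply Rabs_eq_pm; [right|]| |]; lra.
Qed.

Lemma hat_in_strip_tri p u h a b c q : in_strip_tri p u h a b c -> hat q u h = tri_coord p q a b c.
Proof.
  intros HT. destruct (hat_vertex _ _ _ _ _ _ HT) as (H0 & H1 & H2). unfold tri_coord.
  destruct (Nat.eqb_spec q p) as [->|?]; auto.
  destruct (Nat.eqb_spec q (p + 1)) as [->|?]; auto.
  destruct (Nat.eqb_spec q (p + 2)) as [->|?]; auto.
  apply (hat_off p u h a b c); auto.
Qed.

Lemma in_strip_tri_deck N p u h a b c : in_strip_tri p u h a b c ->
  in_strip_tri (p + N) (u + INR N) (flip_if (Nat.odd N) h) a b c.
Proof.
  intros (Ha & Hb & Hc & Hs & Hu & Hh). unfold in_strip_tri.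
  replace (p + N + 1)%nat with ((p + 1) + N)%nat by lia.
  replace (p + N + 2)%nat with ((p + 2) + N)%nat by lia.
  rewrite !(parity_add N), !(plus_INR _ N). repeat split; auto.
  - rewrite Hu. replace a with (1 - b - c) by lra. ring.
  - rewrite Hh. unfold flip_if. destruct (Nat.odd N); [|auto].
    replace a with (1 - b - c) by lra. ring.
Qed.

Lemma strip_tri_exists N u h : 1 <= u <= INR N + 1 -> 0 <= h <= 1 ->
  exists p a b c, (p <= N)%nat /\ in_strip_tri p u h a b c.
Proof.
  intros Hu Hh. destruct (archimed u) as [A1 A2].
  set (q := Z.to_nat (up u - 1)).
  assert (Hup : (1 < up u)%Z) by (apply lt_IZR; lra).
  assert (Hq : INR q = IZR (up u) - 1).
  { unfold q. rewrite INR_IZR_INZ, Z2Nat.id by lia. rewrite minus_IZR. reflexivity. }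
  assert (Hq1 : (1 <= q)%nat) by (unfold q; lia).
  set (f := u - INR q). assert (Hfq : f = u - INR q) by reflexivity.
  assert (Hf : 0 <= f < 1) by lra.
  set (w := Rabs (h - parity q)).
  assert (Hw : w = (if Nat.even q then h else 1 - h)).
  { unfold w, parity. destruct (Nat.even q); [rewrite Rminus_0_r; apply Rabs_pos_eq; lra|].
    rewrite Rabs_minus_sym. apply Rabs_pos_eq; lra. }
  assert (Hw01 : 0 <= w <= 1) by (rewrite Hw; destruct (Nat.even q); lra).
  assert (HE : parity q = (if Nat.even q then 0 else 1)) by reflexivity.
  destruct (Rle_lt_dec f w).
  - exists (q - 1)%nat, ((w - f) / 2), (1 - w), ((f + w) / 2).
    assert (HqN : (q <= N + 1)%nat) by (apply INR_le; rewrite plus_INR; simpl INR; lra).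
    split; [lia|]. unfold in_strip_tri.
    replace (q - 1 + 1)%nat with q by lia. replace (q - 1 + 2)%nat with (q + 1)%nat by lia.
    assert (Hqm : INR (q - 1) = INR q - 1) by (rewrite minus_INR by lia; simpl; ring).
    assert (Eqm : parity (q - 1) = 1 - parity q)
      by (replace (parity q) with (parity (S (q - 1))) by (f_equal; lia);
          rewrite parity_S; lra).
    rewrite parity_add1, Eqm, plus_INR, Hqm. simpl INR.
    repeat split; try lra;
      try (rewrite Hfq; field); rewrite HE, Hw; destruct (Nat.even q); field.
  - exists q, (1 - (f + w) / 2), w, ((f - w) / 2).
    assert (HqN : (q <= N)%nat).
    { assert (INR q < INR (N + 1)) by (rewrite plus_INR; simpl; lra).
      apply INR_lt in H. lia. }
    split; [auto|]. unfold in_strip_tri.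
    rewrite parity_add1, parity_add2, !plus_INR. simpl INR.
    repeat split; try lra;
      try (rewrite Hfq; field); rewrite HE, Hw; destruct (Nat.even q); field.
Qed.

Lemma Rmax0_lip a b : Rabs (Rmax 0 a - Rmax 0 b) <= Rabs (a - b).
Proof. unfold Rmax; repeat destruct Rle_dec; unfold Rabs; repeat destruct Rcase_abs; lra. Qed.

Lemma Rmin_lip a b a' b' :
  Rabs (Rmin a b - Rmin a' b') <= Rmax (Rabs (a - a')) (Rabs (b - b')).
Proof.
  unfold Rmin; repeat destruct Rle_dec; unfold Rmax; repeat destruct Rle_dec;
  unfold Rabs in *; repeat destruct Rcase_abs; lra.
Qed.

Lemma tent_lip t w t' w' : Rabs (tent t w - tent t' w') <= Rabs (t - t') + Rabs (w - w').
Proof.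
  unfold tent. eapply Rle_trans; [apply Rmax0_lip|].
  eapply Rle_trans; [apply Rmin_lip|].
  pose proof (Rabs_triang_inv2 t t'). pose proof (Rabs_pos (t - t')). pose proof (Rabs_pos (w - w')).
  apply Rmax_lub.
  - replace (1 - w - (1 - w')) with (- (w - w')) by ring. rewrite Rabs_Ropp. lra.
  - replace (1 - (Rabs t + w) / 2 - (1 - (Rabs t' + w') / 2))
      with (- ((Rabs t - Rabs t') + (w - w')) * / 2) by field.
    rewrite Rabs_mult, Rabs_Ropp, (Rabs_pos_eq (/ 2)) by lra.
    pose proof (Rabs_triang (Rabs t - Rabs t') (w - w')). lra.
Qed.

Lemma hat_lip q u h u' h' : Rabs (hat q u h - hat q u' h') <= Rabs (u - u') + Rabs (h - h').
Proof.
  unfold hat. eapply Rle_trans; [apply tent_lip|].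
  replace (u - INR q - (u' - INR q)) with (u - u') by ring.
  pose proof (Rabs_triang_inv2 (h - parity q) (h' - parity q)).
  replace (h - parity q - (h' - parity q)) with (h - h') in H by ring. lra.
Qed.

Lemma hat_deck N q u h : hat (q + N) (u + INR N) (flip_if (Nat.odd N) h) = hat q u h.
Proof.
  unfold hat. rewrite plus_INR, parity_add, flip_if_dist. f_equal. ring.
Qed.

(** * The zigzag complex on Z/N *)

Definition tri_support (N L : nat) (x : Rpoint) : Prop :=
  forall j, (j < N)%nat -> x j <> 0 ->
    j = L mod N \/ j = (L + 1) mod N \/ j = (L + 2) mod N.

Definition zigzag (N : nat) (x : Rpoint) : Prop :=
  (forall i, (N <= i)%nat -> x i = 0) /\ (forall i, 0 <= x i) /\ sumR N x = 1 /\
  exists i, (i < N)%nat /\ tri_support N i x.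

Lemma tri_vertices_distinct N L : (3 <= N)%nat ->
  (L mod N <> (L + 1) mod N)%nat /\ (L mod N <> (L + 2) mod N)%nat /\
  ((L + 1) mod N <> (L + 2) mod N)%nat.
Proof.
  intros HN. split; [|split]; [apply mod_neq_add; lia | apply mod_neq_add; lia |].
  apply mod_neq_add2; lia.
Qed.

Lemma tri_support_sum N L x : (3 <= N)%nat -> sumR N x = 1 -> tri_support N L x ->
  x (L mod N) + x ((L + 1) mod N) + x ((L + 2) mod N) = 1.
Proof.
  intros HN Hs HT. destruct (tri_vertices_distinct N L HN) as [D1 [D2 D3]].
  rewrite <- Hs. symmetry. apply sumR_three; auto; apply mod_bound; lia.
Qed.

Lemma tri_support_zero N L x j : (0 < N)%nat -> tri_support N L x ->
  (j mod N <> L mod N)%nat -> (j mod N <> (L + 1) mod N)%nat ->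
  (j mod N <> (L + 2) mod N)%nat -> x (j mod N) = 0.
Proof.
  intros HN HT H1 H2 H3. destruct (Req_EM_T (x (j mod N)) 0) as [E|E]; auto.
  destruct (HT (j mod N) (mod_bound N j HN) E) as [?|[?|?]]; contradiction.
Qed.

Lemma tri_support_add_modulus N L x : tri_support N (L + N) x <-> tri_support N L x.
Proof. unfold tri_support. rewrite !mod_add_modulus_l, mod_add_modulus. tauto. Qed.

Lemma tri_support_mod N L x : (0 < N)%nat -> tri_support N (L mod N) x <-> tri_support N L x.
Proof.
  intros HN. unfold tri_support.
  rewrite Nat.Div0.mod_mod, !Nat.Div0.add_mod_idemp_l by lia. tauto.
Qed.

(* Strip coordinates of [x], read through the lift [{L, L+1, L+2}] of its triangle. *)
Definition unfold_u (N L : nat) (x : Rpoint) : R :=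
  x (L mod N) * INR L + x ((L + 1) mod N) * INR (L + 1) + x ((L + 2) mod N) * INR (L + 2).
Definition unfold_h (N L : nat) (x : Rpoint) : R :=
  x (L mod N) * parity L + x ((L + 1) mod N) * parity (L + 1)
  + x ((L + 2) mod N) * parity (L + 2).

Lemma in_strip_tri_unfold N L x : (forall i, 0 <= x i) ->
  x (L mod N) + x ((L + 1) mod N) + x ((L + 2) mod N) = 1 ->
  in_strip_tri L (unfold_u N L x) (unfold_h N L x)
    (x (L mod N)) (x ((L + 1) mod N)) (x ((L + 2) mod N)).
Proof. intros Hp Hs. unfold in_strip_tri, unfold_u, unfold_h. repeat split; auto. Qed.

Lemma unfold_deck N L x : x (L mod N) + x ((L + 1) mod N) + x ((L + 2) mod N) = 1 ->
  unfold_u N (L + N) x = unfold_u N L x + INR N /\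
  unfold_h N (L + N) x = flip_if (Nat.odd N) (unfold_h N L x).
Proof.
  intros Hs. unfold unfold_u, unfold_h. rewrite !mod_add_modulus_l, mod_add_modulus.
  replace (L + N + 1)%nat with ((L + 1) + N)%nat by lia.
  replace (L + N + 2)%nat with ((L + 2) + N)%nat by lia.
  rewrite !(parity_add N), !(plus_INR _ N).
  replace (x (L mod N)) with (1 - x ((L + 1) mod N) - x ((L + 2) mod N)) by lra.
  unfold flip_if. split; [ring|]. destruct (Nat.odd N); ring.
Qed.

Ltac solve_mod_neq :=
  rewrite <- ?Nat.add_assoc; simpl Nat.add;
  first [ apply mod_neq_add; lia | apply not_eq_sym, mod_neq_add; lia
        | apply mod_neq_add2; lia | apply not_eq_sym, mod_neq_add2; lia ].

(* Two lifts of triangles that share an edge or a vertex and both carry [x] give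
   the same strip point; [5 <= N] keeps the vertices [L, ..., L+4] distinct. *)
Lemma unfold_shift1 N L x : (5 <= N)%nat -> tri_support N L x -> tri_support N (L + 1) x ->
  unfold_u N L x = unfold_u N (L + 1) x /\ unfold_h N L x = unfold_h N (L + 1) x.
Proof.
  intros HN H1 H2.
  assert (Z0 : x (L mod N) = 0) by (apply (tri_support_zero N (L + 1)); auto; try lia; solve_mod_neq).
  assert (Z3 : x ((L + 3) mod N) = 0) by (apply (tri_support_zero N L); auto; try lia; solve_mod_neq).
  unfold unfold_u, unfold_h. replace (L + 1 + 1)%nat with (L + 2)%nat by lia.
  replace (L + 1 + 2)%nat with (L + 3)%nat by lia. rewrite Z0, Z3. split; ring.
Qed.

Lemma unfold_shift2 N L x : (5 <= N)%nat -> tri_support N L x -> tri_support N (L + 2) x ->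
  unfold_u N L x = unfold_u N (L + 2) x /\ unfold_h N L x = unfold_h N (L + 2) x.
Proof.
  intros HN H1 H2.
  assert (Z0 : x (L mod N) = 0) by (apply (tri_support_zero N (L + 2)); auto; try lia; solve_mod_neq).
  assert (Z1 : x ((L + 1) mod N) = 0)
    by (apply (tri_support_zero N (L + 2)); auto; try lia; solve_mod_neq).
  assert (Z3 : x ((L + 3) mod N) = 0) by (apply (tri_support_zero N L); auto; try lia; solve_mod_neq).
  assert (Z4 : x ((L + 4) mod N) = 0) by (apply (tri_support_zero N L); auto; try lia; solve_mod_neq).
  unfold unfold_u, unfold_h. replace (L + 2 + 1)%nat with (L + 3)%nat by lia.
  replace (L + 2 + 2)%nat with (L + 4)%nat by lia. rewrite Z0, Z1, Z3, Z4. split; ring.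
Qed.

(* Projection of the strip onto the zigzag complex: vertex [q] of the strip goes to
   [q mod N].  Three lifts suffice since only triangles [p < 2N] are used. *)
Definition fold_strip (N : nat) (u h : R) : Rpoint :=
  fun j => if (j <? N)%nat then hat j u h + hat (j + N) u h + hat (j + 2 * N) u h else 0.

Definition tri_coord_mod (N p j : nat) (a b c : R) : R :=
  if Nat.eqb j (p mod N) then a else if Nat.eqb j ((p + 1) mod N) then b
  else if Nat.eqb j ((p + 2) mod N) then c else 0.

Lemma fold_strip_tri N p u h a b c j : (3 <= N)%nat -> (p < 2 * N)%nat -> (j < N)%nat ->
  in_strip_tri p u h a b c -> fold_strip N u h j = tri_coord_mod N p j a b c.
Proof.
  intros HN Hp Hj HT. unfold fold_strip. destruct (Nat.ltb_spec j N); [|lia].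
  rewrite !(hat_in_strip_tri p u h a b c) by auto.
  unfold tri_coord_mod, tri_coord.
  destruct (mod_cases_2N N p ltac:(lia) ltac:(lia)) as [[H1 ->]|[H1 ->]];
  destruct (mod_cases_3N N (p + 1) ltac:(lia) ltac:(lia)) as [[H2 ->]|[[H2 ->]|[H2 ->]]];
  destruct (mod_cases_3N N (p + 2) ltac:(lia) ltac:(lia)) as [[H3 ->]|[[H3 ->]|[H3 ->]]];
  try (exfalso; lia);
  repeat match goal with |- context [Nat.eqb ?x ?y] =>
    destruct (Nat.eqb_spec x y); try (exfalso; lia) end; lra.
Qed.

Lemma fold_strip_high N u h j : (N <= j)%nat -> fold_strip N u h j = 0.
Proof. intros; unfold fold_strip; destruct (Nat.ltb_spec j N); [lia|auto]. Qed.

Lemma fold_strip_deck N u h : (3 <= N)%nat -> 1 <= u <= INR N + 1 ->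
  fold_strip N (u + INR N) (flip_if (Nat.odd N) h) = fold_strip N u h.
Proof.
  intros HN Hu. apply functional_extensionality; intro j. unfold fold_strip.
  destruct (Nat.ltb_spec j N); [|auto].
  replace (j + 2 * N)%nat with ((j + N) + N)%nat by lia. rewrite !hat_deck.
  assert (HjN : INR j + 1 <= INR N) by (rewrite <- S_INR; apply le_INR; lia).
  assert (H3 : 3 <= INR N) by (replace 3 with (INR 3) by (simpl; lra); apply le_INR; lia).
  assert (Hj0 := pos_INR j).
  assert (E1 : hat j (u + INR N) (flip_if (Nat.odd N) h) = 0).
  { unfold hat. apply (tent_eq_0 _ _ (u + INR N - INR j)); [apply Rabs_eq_pm; [left|]| |];
      try lra; pose proof (Rabs_pos (flip_if (Nat.odd N) h - parity j)); lra. }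
  assert (E2 : hat ((j + N) + N) u h = 0).
  { unfold hat. rewrite !plus_INR.
    apply (tent_eq_0 _ _ (INR j + INR N + INR N - u)); [apply Rabs_eq_pm; [right|]| |];
      try lra; pose proof (Rabs_pos (h - parity (j + N + N))); lra. }
  rewrite E1, E2. ring.
Qed.

Lemma fold_strip_lip N u h u' h' j :
  Rabs (fold_strip N u h j - fold_strip N u' h' j) <= 3 * (Rabs (u - u') + Rabs (h - h')).
Proof.
  unfold fold_strip. destruct (j <? N)%nat.
  - pose proof (hat_lip j u h u' h'). pose proof (hat_lip (j + N) u h u' h').
    pose proof (hat_lip (j + 2 * N) u h u' h').
    set (d1 := hat j u h - hat j u' h') in *.
    set (d2 := hat (j + N) u h - hat (j + N) u' h') in *.
    set (d3 := hat (j + 2 * N) u h - hat (j + 2 * N) u' h') in *.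
    replace (_ - _) with ((d1 + d2) + d3) by (unfold d1, d2, d3; ring).
    pose proof (Rabs_triang (d1 + d2) d3). pose proof (Rabs_triang d1 d2). lra.
  - rewrite Rminus_0_r, Rabs_R0. pose proof (Rabs_pos (u - u')).
    pose proof (Rabs_pos (h - h')). lra.
Qed.

Lemma tri_coord_mod_vertices N p a b c : (3 <= N)%nat ->
  tri_coord_mod N p (p mod N) a b c = a /\ tri_coord_mod N p ((p + 1) mod N) a b c = b /\
  tri_coord_mod N p ((p + 2) mod N) a b c = c.
Proof.
  intros HN. destruct (tri_vertices_distinct N p HN) as [D1 [D2 D3]]. unfold tri_coord_mod.
  repeat match goal with |- context [Nat.eqb ?x ?y] =>
    destruct (Nat.eqb_spec x y); try (exfalso; congruence) end; auto.
Qed.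

Lemma tri_coord_mod_support N p j a b c : tri_coord_mod N p j a b c <> 0 ->
  j = p mod N \/ j = (p + 1) mod N \/ j = (p + 2) mod N.
Proof.
  unfold tri_coord_mod.
  repeat match goal with |- context [Nat.eqb ?x ?y] => destruct (Nat.eqb_spec x y) end; auto.
  intros H; exfalso; apply H; reflexivity.
Qed.

Lemma tri_coord_mod_add_modulus N p j a b c :
  tri_coord_mod N (p + N) j a b c = tri_coord_mod N p j a b c.
Proof. unfold tri_coord_mod. rewrite !mod_add_modulus_l, mod_add_modulus. reflexivity. Qed.

Lemma tri_coord_mod_self N L x j : tri_support N L x -> (j < N)%nat ->
  tri_coord_mod N L j (x (L mod N)) (x ((L + 1) mod N)) (x ((L + 2) mod N)) = x j.
Proof.
  intros HT Hj. unfold tri_coord_mod.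
  repeat match goal with |- context [Nat.eqb ?x ?y] =>
    destruct (Nat.eqb_spec x y); [subst; reflexivity|] end.
  destruct (Req_EM_T (x j) 0) as [E|E]; [auto|].
  destruct (HT j Hj E) as [?|[?|?]]; contradiction.
Qed.

Lemma fold_strip_support N p u h a b c : (3 <= N)%nat -> (p < 2 * N)%nat ->
  in_strip_tri p u h a b c -> tri_support N p (fold_strip N u h).
Proof.
  intros HN Hp HT j Hj Hnz. rewrite (fold_strip_tri N p u h a b c) in Hnz by auto.
  apply tri_coord_mod_support in Hnz. auto.
Qed.

Lemma fold_strip_vertices N p u h a b c : (3 <= N)%nat -> (p < 2 * N)%nat ->
  in_strip_tri p u h a b c ->
  fold_strip N u h (p mod N) = a /\ fold_strip N u h ((p + 1) mod N) = b /\
  fold_strip N u h ((p + 2) mod N) = c.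
Proof.
  intros HN Hp HT. rewrite !(fold_strip_tri N p u h a b c) by (auto; apply mod_bound; lia).
  apply tri_coord_mod_vertices; auto.
Qed.

Lemma fold_strip_zigzag N p u h a b c : (3 <= N)%nat -> (p < 2 * N)%nat ->
  in_strip_tri p u h a b c -> zigzag N (fold_strip N u h).
Proof.
  intros HN Hp HT. assert (HT' := HT). destruct HT' as (Ha & Hb & Hc & Hs & _).
  destruct (fold_strip_vertices N p u h a b c HN Hp HT) as [V1 [V2 V3]].
  assert (Hsupp := fold_strip_support N p u h a b c HN Hp HT).
  destruct (tri_vertices_distinct N p HN) as [D1 [D2 D3]].
  split; [|split; [|split]].
  - apply fold_strip_high.
  - intros i. unfold fold_strip, hat. destruct (i <? N)%nat; [|lra].
    pose proof (tent_nonneg (u - INR i) (Rabs (h - parity i))).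
    pose proof (tent_nonneg (u - INR (i + N)) (Rabs (h - parity (i + N)))).
    pose proof (tent_nonneg (u - INR (i + 2 * N)) (Rabs (h - parity (i + 2 * N)))). lra.
  - rewrite (sumR_three N _ (p mod N) ((p + 1) mod N) ((p + 2) mod N));
      auto; try (apply mod_bound; lia). lra.
  - exists (p mod N). split; [apply mod_bound; lia|].
    apply tri_support_mod; auto; lia.
Qed.

Lemma fold_unfold N p x a b c u h : in_strip_tri p u h a b c ->
  x (p mod N) = a -> x ((p + 1) mod N) = b -> x ((p + 2) mod N) = c ->
  unfold_u N p x = u /\ unfold_h N p x = h.
Proof.
  intros (_ & _ & _ & _ & Hu & Hh) E1 E2 E3. unfold unfold_u, unfold_h.
  rewrite E1, E2, E3. auto.
Qed.

Lemma weighted_three_lip N x y i j k w1 w2 w3 B : (i < N)%nat -> (j < N)%nat -> (k < N)%nat ->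
  Rabs w1 <= B -> Rabs w2 <= B -> Rabs w3 <= B ->
  Rabs ((x i * w1 + x j * w2 + x k * w3) - (y i * w1 + y j * w2 + y k * w3))
    <= 3 * B * dist N x y.
Proof.
  intros Hi Hj Hk H1 H2 H3.
  assert (T : forall l w, (l < N)%nat -> Rabs w <= B -> Rabs ((x l - y l) * w) <= B * dist N x y).
  { intros l w Hl Hw. rewrite Rabs_mult, Rmult_comm.
    apply Rmult_le_compat; auto using Rabs_pos, dist_coord_le. }
  replace (_ - _) with (((x i - y i) * w1 + (x j - y j) * w2) + (x k - y k) * w3) by ring.
  pose proof (T i w1 Hi H1). pose proof (T j w2 Hj H2). pose proof (T k w3 Hk H3).
  pose proof (Rabs_triang ((x i - y i) * w1 + (x j - y j) * w2) ((x k - y k) * w3)).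
  pose proof (Rabs_triang ((x i - y i) * w1) ((x j - y j) * w2)). lra.
Qed.

Lemma unfold_lip N L x y : (0 < N)%nat -> (L < N)%nat ->
  Rabs (unfold_u N L x - unfold_u N L y) + Rabs (unfold_h N L x - unfold_h N L y)
    <= (3 * (INR N + 2) + 3) * dist N x y.
Proof.
  intros HN HL.
  assert (Hw : forall r, (r <= 2)%nat -> Rabs (INR (L + r)) <= INR N + 2).
  { intros r Hr. rewrite Rabs_pos_eq by apply pos_INR. rewrite plus_INR.
    assert (INR L <= INR N) by (apply le_INR; lia). assert (INR r <= 2) by (apply (le_INR r 2); lia).
    lra. }
  assert (Hp : forall q, Rabs (parity q) <= 1)
    by (intro q; destruct (parity_01 q) as [E|E]; rewrite E; [rewrite Rabs_R0|rewrite Rabs_R1]; lra).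
  unfold unfold_u, unfold_h.
  pose proof (weighted_three_lip N x y (L mod N) ((L + 1) mod N) ((L + 2) mod N)
    (parity L) (parity (L + 1)) (parity (L + 2)) 1 ltac:(apply mod_bound; lia)
    ltac:(apply mod_bound; lia) ltac:(apply mod_bound; lia) (Hp _) (Hp _) (Hp _)).
  pose proof (weighted_three_lip N x y (L mod N) ((L + 1) mod N) ((L + 2) mod N)
    (INR L) (INR (L + 1)) (INR (L + 2)) (INR N + 2) ltac:(apply mod_bound; lia)
    ltac:(apply mod_bound; lia) ltac:(apply mod_bound; lia)
    ltac:(rewrite <- (Nat.add_0_r L) at 1; apply Hw; lia) (Hw 1%nat ltac:(lia)) (Hw 2%nat ltac:(lia))).
  lra.
Qed.

Fixpoint min_support (x : Rpoint) (m : nat) : R :=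
  match m with
  | O => 1
  | S m' => if Req_EM_T (x m') 0 then min_support x m' else Rmin (min_support x m') (x m')
  end.

Lemma min_support_pos x m : (forall j, 0 <= x j) -> 0 < min_support x m.
Proof.
  intros Hx. induction m; simpl; [lra|]. destruct Req_EM_T; auto.
  apply Rmin_glb_lt; auto. destruct (Hx m); [auto|congruence].
Qed.

Lemma min_support_le x m j : (j < m)%nat -> x j <> 0 -> min_support x m <= x j.
Proof.
  induction m; intros Hj Hx; [lia|]. simpl. destruct (Nat.eq_dec j m) as [->|Hne].
  - destruct Req_EM_T; [congruence|]. apply Rmin_r.
  - destruct Req_EM_T; [apply IHm; auto; lia|].
    eapply Rle_trans; [apply Rmin_l|]. apply IHm; auto; lia.
Qed.

Lemma tri_support_near N L x y : (forall j, 0 <= x j) -> tri_support N L y ->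
  dist N x y < min_support x N -> tri_support N L x.
Proof.
  intros Hx HT Hd j Hj Hxj. apply HT; auto. intro Hyj.
  assert (B := dist_coord_le N x y j Hj). rewrite Hyj, Rminus_0_r, Rabs_pos_eq in B by auto.
  pose proof (min_support_le x N j Hj Hxj). lra.
Qed.

(** * Zigzag complexes as quotients of the strip *)

Definition deck_invariant (N : nat) (P : R -> R -> Rpoint) : Prop :=
  forall u h, P (u + INR N) (flip_if (Nat.odd N) h) = P u h.

Lemma param_unfold_deck N (P : R -> R -> Rpoint) x L : (3 <= N)%nat -> deck_invariant N P ->
  zigzag N x -> tri_support N L x ->
  P (unfold_u N (L + N) x) (unfold_h N (L + N) x) = P (unfold_u N L x) (unfold_h N L x).
Proof.
  intros HN HD (_ & _ & Hs & _) HT.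
  destruct (unfold_deck N L x (tri_support_sum N L x HN Hs HT)) as [-> ->]. apply HD.
Qed.

Lemma param_unfold_step N (P : R -> R -> Rpoint) x L L' : (5 <= N)%nat ->
  tri_support N L x -> tri_support N L' x ->
  (L' = L + 1 \/ L' = L + 2)%nat ->
  P (unfold_u N L x) (unfold_h N L x) = P (unfold_u N L' x) (unfold_h N L' x).
Proof.
  intros HN H1 H2 [-> | ->].
  - destruct (unfold_shift1 N L x HN H1 H2) as [-> ->]; auto.
  - destruct (unfold_shift2 N L x HN H1 H2) as [-> ->]; auto.
Qed.

Lemma tri_support_overlap N x i i' : (3 <= N)%nat -> sumR N x = 1 -> (i < N)%nat -> (i' < N)%nat ->
  tri_support N i x -> tri_support N i' x ->
  (i' = i \/ i' = i + 1 \/ i' = i + 2 \/ i = i' + 1 \/ i = i' + 2 \/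
   i' + N = i + 1 \/ i' + N = i + 2 \/ i + N = i' + 1 \/ i + N = i' + 2)%nat.
Proof.
  intros HN Hs Hi Hi' T1 T2. destruct (sumR_support N x Hs) as [j [Hj Hx]].
  destruct (T1 j Hj Hx) as [E1|[E1|E1]]; destruct (T2 j Hj Hx) as [E2|[E2|E2]];
    rewrite ?(Nat.mod_small i N Hi), ?(Nat.mod_small i' N Hi') in *;
    try (destruct (mod_cases_2N N (i + 1) ltac:(lia) ltac:(lia)) as [[? E3]|[? E3]]; rewrite E3 in *);
    try (destruct (mod_cases_2N N (i + 2) ltac:(lia) ltac:(lia)) as [[? E3]|[? E3]]; rewrite E3 in *);
    try (destruct (mod_cases_2N N (i' + 1) ltac:(lia) ltac:(lia)) as [[? E4]|[? E4]]; rewrite E4 in *);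
    try (destruct (mod_cases_2N N (i' + 2) ltac:(lia) ltac:(lia)) as [[? E4]|[? E4]]; rewrite E4 in *);
    lia.
Qed.

Lemma param_unfold_indep N (P : R -> R -> Rpoint) x i i' : (5 <= N)%nat -> deck_invariant N P ->
  zigzag N x ->
  (i < N)%nat -> (i' < N)%nat -> tri_support N i x -> tri_support N i' x ->
  P (unfold_u N i x) (unfold_h N i x) = P (unfold_u N i' x) (unfold_h N i' x).
Proof.
  intros HN HD HZ Hi Hi' T1 T2. assert (HZ' := HZ). destruct HZ' as (_ & _ & Hs & _).
  assert (TN : forall L, tri_support N L x -> tri_support N (L + N) x)
    by (intros; apply tri_support_add_modulus; auto).
  destruct (tri_support_overlap N x i i' ltac:(lia) Hs Hi Hi' T1 T2)
    as [->|[E|[E|[E|[E|[E|[E|[E|E]]]]]]]].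
  - reflexivity.
  - apply param_unfold_step; auto; lia.
  - apply param_unfold_step; auto; lia.
  - symmetry; apply param_unfold_step; auto; lia.
  - symmetry; apply param_unfold_step; auto; lia.
  - rewrite <- (param_unfold_deck N P x i') by (auto; lia). apply param_unfold_step; auto; lia.
  - rewrite <- (param_unfold_deck N P x i') by (auto; lia). apply param_unfold_step; auto; lia.
  - rewrite <- (param_unfold_deck N P x i) by (auto; lia).
    symmetry; apply param_unfold_step; auto; lia.
  - rewrite <- (param_unfold_deck N P x i) by (auto; lia).
    symmetry; apply param_unfold_step; auto; lia.
Qed.

Lemma zigzag_unfold N L x : (3 <= N)%nat -> zigzag N x -> tri_support N L x ->
  in_strip_tri L (unfold_u N L x) (unfold_h N L x)
    (x (L mod N)) (x ((L + 1) mod N)) (x ((L + 2) mod N)).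
Proof.
  intros HN (_ & Hpos & Hs & _) HT. apply in_strip_tri_unfold; auto. apply tri_support_sum; auto.
Qed.

Definition fund_domain (N : nat) (u h : R) : Prop := 1 < u <= INR N + 1 /\ 0 <= h <= 1.

Definition lipschitz_param (P : R -> R -> Rpoint) : Prop :=
  exists K, 0 < K /\ forall u h u' h', 0 <= h <= 1 -> 0 <= h' <= 1 ->
    dist 3 (P u h) (P u' h') <= K * (Rabs (u - u') + Rabs (h - h')).

(* Uniform continuity of the inverse of [P] on the fundamental domain, up to the deck
   transformation. *)
Definition deck_near_inverse (N : nat) (P : R -> R -> Rpoint) : Prop :=
  forall eps, 0 < eps -> exists delta, 0 < delta /\
  forall u h u' h', fund_domain N u h -> fund_domain N u' h' -> dist 3 (P u h) (P u' h') < delta ->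
    (Rabs (u - u') < eps /\ Rabs (h - h') < eps) \/
    (Rabs (u' + INR N - u) < eps /\ Rabs (flip_if (Nat.odd N) h' - h) < eps) \/
    (Rabs (u + INR N - u') < eps /\ Rabs (flip_if (Nat.odd N) h - h') < eps).

Section ModelHomeomorphism.

Variable N : nat.
Variable P : R -> R -> Rpoint.
Variable M : Rpoint -> Prop.

Hypothesis N_ge5 : (5 <= N)%nat.
Hypothesis P_deck : deck_invariant N P.
Hypothesis P_lip : lipschitz_param P.
Hypothesis P_inj : forall u h u' h', fund_domain N u h -> fund_domain N u' h' ->
  P u h = P u' h' -> u = u' /\ h = h'.
Hypothesis P_near : deck_near_inverse N P.
Hypothesis P_maps : forall u h, 0 <= u <= INR N + 2 -> 0 <= h <= 1 -> M (P u h).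
Hypothesis P_onto : forall y, M y -> exists u h, fund_domain N u h /\ y = P u h.

Definition tri_index (x : Rpoint) : nat :=
  epsilon (inhabits 0%nat) (fun i => (i < N)%nat /\ tri_support N i x).

Lemma tri_index_spec x : zigzag N x -> (tri_index x < N)%nat /\ tri_support N (tri_index x) x.
Proof.
  intros (_ & _ & _ & H). unfold tri_index.
  apply (epsilon_spec (inhabits 0%nat) (fun i => (i < N)%nat /\ tri_support N i x) H).
Qed.

Definition to_model (x : Rpoint) : Rpoint :=
  P (unfold_u N (tri_index x) x) (unfold_h N (tri_index x) x).

Definition model_param (y : Rpoint) : R * R :=
  epsilon (inhabits (0, 0)) (fun uh => fund_domain N (fst uh) (snd uh) /\ y = P (fst uh) (snd uh)).

Lemma model_param_spec y : M y ->
  fund_domain N (fst (model_param y)) (snd (model_param y)) /\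
  y = P (fst (model_param y)) (snd (model_param y)).
Proof.
  intros HM. destruct (P_onto y HM) as [u [h H]]. unfold model_param.
  apply (epsilon_spec (inhabits (0, 0))
    (fun uh => fund_domain N (fst uh) (snd uh) /\ y = P (fst uh) (snd uh))).
  exists (u, h). exact H.
Qed.

Definition of_model (y : Rpoint) : Rpoint :=
  fold_strip N (fst (model_param y)) (snd (model_param y)).

Lemma to_model_in x : zigzag N x -> M (to_model x).
Proof.
  intros HZ. destruct (tri_index_spec x HZ) as [Hi Hsupp].
  assert (HT := zigzag_unfold N _ x ltac:(lia) HZ Hsupp).
  assert (Hu := in_strip_tri_u _ _ _ _ _ _ HT). assert (Hh := in_strip_tri_h_bounds _ _ _ _ _ _ HT).
  destruct HT as (Ha & Hb & Hc & Hs & _).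
  assert (INR (tri_index x) + 1 <= INR N) by (rewrite <- S_INR; apply le_INR; lia).
  pose proof (pos_INR (tri_index x)).
  unfold to_model. apply P_maps; auto. lra.
Qed.

Lemma zigzag_fund_param x : zigzag N x ->
  exists u h, fund_domain N u h /\ P u h = to_model x /\ fold_strip N u h = x.
Proof.
  intros HZ. destruct (tri_index_spec x HZ) as [Hi Hsupp].
  assert (HT := zigzag_unfold N _ x ltac:(lia) HZ Hsupp).
  assert (Hv := proj1 HZ). unfold to_model. set (i := tri_index x) in *.
  set (U := unfold_u N i x) in *. set (H := unfold_h N i x) in *.
  set (a := x (i mod N)) in *. set (b := x ((i + 1) mod N)) in *. set (c := x ((i + 2) mod N)) in *.
  assert (Hu := in_strip_tri_u _ _ _ _ _ _ HT). assert (Hh := in_strip_tri_h_bounds _ _ _ _ _ _ HT).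
  assert (Hfold : forall p, (p = i \/ p = i + N)%nat -> forall u h, in_strip_tri p u h a b c ->
    fold_strip N u h = x).
  { intros p Hp u h Hpuh. apply functional_extensionality. intros j.
    destruct (Nat.lt_ge_cases j N).
    - rewrite (fold_strip_tri N p u h a b c) by (auto; lia).
      destruct Hp as [-> | ->]; [|rewrite tri_coord_mod_add_modulus];
        apply tri_coord_mod_self; auto.
    - rewrite fold_strip_high, Hv by auto. reflexivity. }
  assert (HT' := HT). destruct HT' as (Ha & Hb & Hc & Hs & _).
  assert (INR i + 1 <= INR N) by (rewrite <- S_INR; apply le_INR; lia).
  assert (5 <= INR N) by (replace 5 with (INR 5) by (simpl; lra); apply le_INR; lia).
  pose proof (pos_INR i).
  destruct (Rle_lt_dec U 1).
  - exists (U + INR N), (flip_if (Nat.odd N) H). split; [|split].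
    + unfold fund_domain, flip_if; destruct (Nat.odd N); lra.
    + apply P_deck.
    + apply (Hfold (i + N)%nat); auto. apply in_strip_tri_deck; auto.
  - exists U, H. split; [unfold fund_domain; lra|]. split; auto.
    apply (Hfold i); auto.
Qed.

Lemma of_model_zigzag y : M y -> zigzag N (of_model y).
Proof.
  intros HM. destruct (model_param_spec y HM) as [[Hu Hh] _].
  destruct (strip_tri_exists N (fst (model_param y)) _ ltac:(lra) Hh)
    as [p [a [b [c [Hp HT]]]]].
  apply (fold_strip_zigzag N p _ _ a b c); auto; lia.
Qed.

Lemma of_to_model x : zigzag N x -> of_model (to_model x) = x.
Proof.
  intros HZ. destruct (zigzag_fund_param x HZ) as [u [h [Hfd [HP Hx]]]].
  assert (HM : M (to_model x)) by (apply to_model_in; auto).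
  destruct (model_param_spec _ HM) as [Hfd' HP'].
  destruct (P_inj _ _ _ _ Hfd Hfd' (eq_trans HP HP')) as [Eu Eh].
  unfold of_model. rewrite <- Eu, <- Eh. exact Hx.
Qed.

Lemma to_of_model y : M y -> to_model (of_model y) = y.
Proof.
  intros HM. assert (HZ := of_model_zigzag y HM).
  destruct (model_param_spec y HM) as [[Hu Hh] Hy].
  unfold of_model in *. set (u := fst (model_param y)) in *. set (h := snd (model_param y)) in *.
  destruct (strip_tri_exists N u h ltac:(lra) Hh) as [p [a [b [c [Hp HT]]]]].
  set (x := fold_strip N u h) in *.
  destruct (fold_strip_vertices N p u h a b c ltac:(lia) ltac:(lia) HT) as [V1 [V2 V3]].
  assert (Tp : tri_support N p x) by (apply (fold_strip_support N p u h a b c); auto; lia).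
  destruct (tri_index_spec x HZ) as [Hi Ti].
  unfold to_model. rewrite (param_unfold_indep N P x (tri_index x) (p mod N)); auto;
    [| apply mod_bound; lia | apply tri_support_mod; auto; lia].
  assert (Hmod : P (unfold_u N (p mod N) x) (unfold_h N (p mod N) x)
                 = P (unfold_u N p x) (unfold_h N p x)).
  { destruct (mod_cases_2N N p ltac:(lia) ltac:(lia)) as [[? E]|[? E]]; rewrite E; [reflexivity|].
    replace p with ((p - N) + N)%nat at 3 4 by lia.
    rewrite (param_unfold_deck N P x (p - N)); auto; try lia.
    rewrite <- E. apply tri_support_mod; auto; lia. }
  rewrite Hmod. destruct (fold_unfold N p x a b c u h HT V1 V2 V3) as [-> ->]. auto.
Qed.

Lemma to_model_cont : cont_on N 3 (zigzag N) to_model.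
Proof.
  intros x Hx eps Heps. destruct P_lip as [K [HK HL]].
  assert (Hx' := Hx). destruct Hx' as (_ & Hpos & _).
  set (C := 3 * (INR N + 2) + 3). assert (HC : 0 < C) by (unfold C; pose proof (pos_INR N); lra).
  assert (Hm := min_support_pos x N Hpos).
  assert (He : 0 < eps / (K * C)) by (apply Rdiv_lt_0_compat; auto; apply Rmult_lt_0_compat; auto).
  exists (Rmin (min_support x N) (eps / (K * C))). split; [apply Rmin_glb_lt; auto|].
  intros y Hy Hd.
  assert (Hd1 : dist N x y < min_support x N) by (eapply Rlt_le_trans; [apply Hd|apply Rmin_l]).
  assert (Hd2 : dist N x y < eps / (K * C)) by (eapply Rlt_le_trans; [apply Hd|apply Rmin_r]).
  destruct (tri_index_spec y Hy) as [Hi' HT'].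
  destruct (tri_index_spec x Hx) as [Hi HT].
  assert (HTx := tri_support_near N _ x y Hpos HT' Hd1).
  unfold to_model at 1. rewrite (param_unfold_indep N P x (tri_index x) (tri_index y)); auto.
  assert (Hhx := in_strip_tri_h_bounds _ _ _ _ _ _ (zigzag_unfold N _ x ltac:(lia) Hx HTx)).
  assert (Hhy := in_strip_tri_h_bounds _ _ _ _ _ _ (zigzag_unfold N _ y ltac:(lia) Hy HT')).
  eapply Rle_lt_trans; [apply HL; auto|].
  assert (L := unfold_lip N (tri_index y) x y ltac:(lia) Hi'). fold C in L.
  apply Rle_lt_trans with (K * (C * dist N x y)); [apply Rmult_le_compat_l; lra|].
  replace eps with (K * (C * (eps / (K * C)))) by (field; lra).
  apply Rmult_lt_compat_l; auto. apply Rmult_lt_compat_l; auto.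
Qed.

Lemma of_model_cont : cont_on 3 N M of_model.
Proof.
  intros y Hy eps Heps.
  destruct (P_near (eps / 6) ltac:(lra)) as [d [Hd Hnd]].
  exists d. split; auto. intros y' Hy' Hdy.
  destruct (model_param_spec y Hy) as [R1 R2].
  destruct (model_param_spec y' Hy') as [R1' R2'].
  unfold of_model. set (u := fst (model_param y)) in *. set (h := snd (model_param y)) in *.
  set (u' := fst (model_param y')) in *. set (h' := snd (model_param y')) in *.
  rewrite R2, R2' in Hdy.
  assert (Hfold : forall u1 h1 u2 h2, Rabs (u1 - u2) < eps / 6 -> Rabs (h1 - h2) < eps / 6 ->
    dist N (fold_strip N u1 h1) (fold_strip N u2 h2) < eps).
  { intros. apply dist_lt_intro; [lra|]. intros j Hj.
    eapply Rle_lt_trans; [apply fold_strip_lip|]. lra. }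
  destruct R1 as [Hu Hh]. destruct R1' as [Hu' Hh'].
  destruct (Hnd u h u' h' (conj Hu Hh) (conj Hu' Hh') Hdy) as [[A1 A2]|[[A1 A2]|[A1 A2]]].
  - auto.
  - rewrite <- (fold_strip_deck N u' h') by (lia || lra).
    rewrite Rabs_minus_sym in A1, A2. auto.
  - rewrite <- (fold_strip_deck N u h) by (lia || lra). auto.
Qed.

Theorem zigzag_homeomorphic : homeomorphic N (zigzag N) 3 M.
Proof.
  exists to_model, of_model. split; [|split; [|split; [|split; [|split]]]].
  - exact to_model_in.
  - exact of_model_zigzag.
  - exact of_to_model.
  - exact to_of_model.
  - exact to_model_cont.
  - exact of_model_cont.
Qed.

End ModelHomeomorphism.

Lemma Rabs_sin_le x : Rabs (sin x) <= Rabs x.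
Proof.
  assert (K : forall y, 0 < y -> - y <= sin y <= y).
  { intros y Hy. split; [|left; apply sin_lt_x; auto].
    destruct (Rle_lt_dec y PI).
    - pose proof (sin_ge_0 y ltac:(lra) r). lra.
    - pose proof (SIN_bound y). pose proof PI_RGT_0. pose proof PI2_3_2. lra. }
  destruct (total_order_T x 0) as [[H|H]|H].
  - pose proof (K (- x) ltac:(lra)). rewrite sin_neg in H0.
    rewrite (Rabs_left x) by auto. unfold Rabs; destruct Rcase_abs; lra.
  - subst. rewrite sin_0. right; reflexivity.
  - pose proof (K x H). rewrite (Rabs_pos_eq x) by lra. unfold Rabs; destruct Rcase_abs; lra.
Qed.

Lemma Rabs_cos_le_1 x : Rabs (cos x) <= 1.
Proof. pose proof (COS_bound x). unfold Rabs; destruct Rcase_abs; lra. Qed.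

Lemma Rabs_sin_le_1 x : Rabs (sin x) <= 1.
Proof. pose proof (SIN_bound x). unfold Rabs; destruct Rcase_abs; lra. Qed.

Lemma Rabs_half_le x : Rabs (x / 2) <= Rabs x / 2.
Proof. unfold Rdiv. rewrite Rabs_mult, (Rabs_pos_eq (/ 2)) by lra. lra. Qed.

(* Both follow from the sum-to-product formulas and [|sin x| <= |x|]. *)
Lemma cos_lip a b : Rabs (cos a - cos b) <= Rabs (a - b).
Proof.
  rewrite form2, !Rabs_mult. replace (Rabs (-2)) with 2 by (unfold Rabs; destruct Rcase_abs; lra).
  pose proof (Rabs_sin_le ((a - b) / 2)). pose proof (Rabs_half_le (a - b)).
  pose proof (Rabs_sin_le_1 ((a + b) / 2)).
  pose proof (Rabs_pos (sin ((a - b) / 2))). pose proof (Rabs_pos (sin ((a + b) / 2))). nra.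
Qed.

Lemma sin_lip a b : Rabs (sin a - sin b) <= Rabs (a - b).
Proof.
  rewrite form4, !Rabs_mult. rewrite (Rabs_pos_eq 2) by lra.
  pose proof (Rabs_sin_le ((a - b) / 2)). pose proof (Rabs_half_le (a - b)).
  pose proof (Rabs_cos_le_1 ((a + b) / 2)).
  pose proof (Rabs_pos (sin ((a - b) / 2))). pose proof (Rabs_pos (cos ((a + b) / 2))). nra.
Qed.

Lemma cos_lt_1 e : 0 < e <= PI -> cos e < 1.
Proof. intros H. rewrite <- cos_0. apply cos_decreasing_1; lra. Qed.

Lemma cos_2PI_minus d : cos (2 * PI - d) = cos d.
Proof. rewrite cos_minus, cos_2PI, sin_2PI. ring. Qed.

Lemma cos_add_2PI t : cos (t + 2 * PI) = cos t.
Proof. rewrite cos_plus, cos_2PI, sin_2PI. ring. Qed.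

Lemma sin_add_2PI t : sin (t + 2 * PI) = sin t.
Proof. rewrite sin_plus, cos_2PI, sin_2PI. ring. Qed.

Lemma cos_gt_near_0 d e : 0 <= d < 2 * PI -> 0 < e <= PI -> cos d > cos e ->
  d < e \/ 2 * PI - d < e.
Proof.
  intros Hd He Hc. destruct (Rle_lt_dec d PI).
  - left. destruct (Rlt_le_dec d e); auto. exfalso.
    destruct (Req_dec d e) as [<-|Hne]; [lra|].
    assert (cos d < cos e) by (apply cos_decreasing_1; lra). lra.
  - right. rewrite <- cos_2PI_minus in Hc.
    destruct (Rlt_le_dec (2 * PI - d) e); auto. exfalso.
    destruct (Req_dec (2 * PI - d) e) as [E|Hne]; [rewrite E in Hc; lra|].
    assert (cos (2 * PI - d) < cos e) by (apply cos_decreasing_1; lra). lra.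
Qed.

Lemma cos_gt_near_period d e : - (2 * PI) < d < 2 * PI -> 0 < e <= PI -> cos d > cos e ->
  Rabs d < e \/ Rabs (d - 2 * PI) < e \/ Rabs (d + 2 * PI) < e.
Proof.
  intros Hd He Hc. destruct (Rle_lt_dec 0 d).
  - destruct (cos_gt_near_0 d e ltac:(lra) He Hc) as [H|H].
    + left; rewrite Rabs_pos_eq; lra.
    + right; left. rewrite Rabs_left by lra. lra.
  - rewrite <- cos_neg in Hc. destruct (cos_gt_near_0 (- d) e ltac:(lra) He Hc) as [H|H].
    + left; rewrite Rabs_left; lra.
    + right; right. rewrite Rabs_pos_eq by lra. lra.
Qed.

Lemma cos_eq_1_small d : - (2 * PI) < d < 2 * PI -> cos d = 1 -> d = 0.
Proof.
  intros Hd Hc. destruct (Req_dec d 0) as [|Hne]; auto. exfalso.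
  assert (HP := PI_RGT_0). assert (Hd0 : 0 < Rabs d) by (apply Rabs_pos_lt; auto).
  assert (Hd1 : Rabs d < 2 * PI) by (unfold Rabs; destruct Rcase_abs; lra).
  set (e := Rmin PI (Rmin (Rabs d / 2) ((2 * PI - Rabs d) / 2))).
  assert (He : 0 < e <= PI).
  { unfold e. split; [apply Rmin_glb_lt; [lra|apply Rmin_glb_lt; lra] | apply Rmin_l]. }
  assert (cos e < 1) by (apply cos_lt_1; auto).
  assert (E1 : e <= Rabs d / 2) by (eapply Rle_trans; [apply Rmin_r|apply Rmin_l]).
  assert (E3 : e <= (2 * PI - Rabs d) / 2) by (eapply Rle_trans; [apply Rmin_r|apply Rmin_r]).
  destruct (cos_gt_near_period d e Hd He ltac:(lra)) as [G|[G|G]]; revert G E1 E3;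
    unfold Rabs; repeat destruct Rcase_abs; lra.
Qed.

Lemma angle_of_unit c s : c ^ 2 + s ^ 2 = 1 ->
  exists t, 0 <= t < 2 * PI /\ cos t = c /\ sin t = s.
Proof.
  intros H. assert (HP := PI_RGT_0).
  assert (Hc : -1 <= c <= 1) by (split; nra).
  assert (Hsq : sqrt (1 - c²) = Rabs s).
  { rewrite <- sqrt_Rsqr_abs. f_equal. unfold Rsqr. nra. }
  destruct (Rle_lt_dec 0 s).
  - exists (acos c). pose proof (acos_bound c). split; [lra|]. split; [apply cos_acos; auto|].
    rewrite sin_acos by auto. rewrite Hsq. apply Rabs_pos_eq; auto.
  - assert (Hc' : -1 < c < 1) by (split; nra).
    pose proof (acos_bound_lt c Hc').
    exists (2 * PI - acos c). split; [lra|]. split.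
    + rewrite cos_2PI_minus. apply cos_acos; auto.
    + rewrite sin_minus, cos_2PI, sin_2PI, sin_acos by auto. rewrite Hsq, Rabs_left by auto. ring.
Qed.

Lemma Rabs_mul_sub_le a b a' b' Bb Ba : Rabs b <= Bb -> Rabs a' <= Ba ->
  Rabs (a * b - a' * b') <= Bb * Rabs (a - a') + Ba * Rabs (b - b').
Proof.
  intros H1 H2. replace (a * b - a' * b') with ((a - a') * b + a' * (b - b')) by ring.
  eapply Rle_trans; [apply Rabs_triang|]. rewrite !Rabs_mult.
  pose proof (Rabs_pos (a - a')). pose proof (Rabs_pos (b - b')).
  pose proof (Rabs_pos b). pose proof (Rabs_pos a'). nra.
Qed.

Lemma Rabs_lt_sqr x d : Rabs x < d -> x ^ 2 < d ^ 2.
Proof. intros H. pose proof (Rabs_pos x). unfold Rabs in H; destruct Rcase_abs; nra. Qed.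

Lemma dist3_lt_coords a b d : dist 3 a b < d ->
  Rabs (a 0%nat - b 0%nat) < d /\ Rabs (a 1%nat - b 1%nat) < d /\ Rabs (a 2%nat - b 2%nat) < d.
Proof. intros H. repeat split; (eapply Rle_lt_trans; [apply dist_coord_le|apply H]; lia). Qed.

Lemma dist3_le_intro a b K : 0 <= K -> Rabs (a 0%nat - b 0%nat) <= K ->
  Rabs (a 1%nat - b 1%nat) <= K -> Rabs (a 2%nat - b 2%nat) <= K -> dist 3 a b <= K.
Proof.
  intros H0 H1 H2 H3. apply dist_le_intro; auto. intros i Hi.
  destruct i as [|[|[|i]]]; auto; lia.
Qed.

(** * Angular coordinate *)

(* The strip coordinate [u] becomes the angle [2 pi u / N], so the deck translation
   by [N] is a full turn. *)
Definition angle (N : nat) (u : R) : R := 2 * PI * u / INR N.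

Lemma INR_pos N : (1 <= N)%nat -> 0 < INR N.
Proof. intros; apply lt_0_INR; lia. Qed.

Lemma angle_step_pos N : (1 <= N)%nat -> 0 < 2 * PI / INR N.
Proof. intros HN. apply Rdiv_lt_0_compat; [pose proof PI_RGT_0; lra | apply INR_pos; auto]. Qed.

Lemma angle_sub N u u' : (1 <= N)%nat -> angle N u - angle N u' = (2 * PI / INR N) * (u - u').
Proof. intros HN. unfold angle. pose proof (INR_pos N HN). field; lra. Qed.

Lemma angle_add_N N u : (1 <= N)%nat -> angle N (u + INR N) = angle N u + 2 * PI.
Proof. intros HN. unfold angle. pose proof (INR_pos N HN). field; lra. Qed.

Lemma angle_lip N u u' : (1 <= N)%nat -> Rabs (angle N u - angle N u') <= 8 * Rabs (u - u').
Proof.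
  intros HN. rewrite angle_sub, Rabs_mult by auto.
  rewrite (Rabs_pos_eq (2 * PI / INR N)) by (left; apply angle_step_pos; auto).
  apply Rmult_le_compat_r; [apply Rabs_pos|].
  assert (1 <= INR N) by (apply (le_INR 1); auto). pose proof PI_4.
  apply Rmult_le_reg_r with (INR N); [lra|]. unfold Rdiv. rewrite Rmult_assoc, Rinv_l by lra. nra.
Qed.

Lemma angle_sub_lt N u u' e : (1 <= N)%nat ->
  Rabs (angle N u - angle N u') < 2 * PI / INR N * e -> Rabs (u - u') < e.
Proof.
  intros HN H. rewrite angle_sub, Rabs_mult in H by auto.
  rewrite (Rabs_pos_eq (2 * PI / INR N)) in H by (left; apply angle_step_pos; auto).
  apply Rmult_lt_reg_l with (2 * PI / INR N); auto. apply angle_step_pos; auto.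
Qed.

Lemma angle_fund N u : (1 <= N)%nat -> 1 < u <= INR N + 1 ->
  2 * PI / INR N < angle N u <= 2 * PI + 2 * PI / INR N.
Proof.
  intros HN Hu. assert (Hk := angle_step_pos N HN). assert (HNp := INR_pos N HN).
  replace (angle N u) with (2 * PI / INR N * u) by (unfold angle; field; lra).
  replace (2 * PI + 2 * PI / INR N) with (2 * PI / INR N * (INR N + 1)) by (field; lra).
  split; [|apply Rmult_le_compat_l; lra].
  rewrite <- (Rmult_1_r (2 * PI / INR N)) at 1. apply Rmult_lt_compat_l; lra.
Qed.

Lemma angle_range N u : (2 <= N)%nat -> 0 <= u <= INR N + 2 ->
  0 <= angle N u <= 2 * PI + 2 * (2 * PI / INR N) /\ 2 * PI / INR N <= PI.
Proof.
  intros HN Hu. assert (HNp := INR_pos N ltac:(lia)). assert (HP := PI_RGT_0).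
  assert (2 <= INR N) by (apply (le_INR 2); auto).
  replace (angle N u) with (2 * PI / INR N * u) by (unfold angle; field; lra).
  replace (2 * PI + 2 * (2 * PI / INR N)) with (2 * PI / INR N * (INR N + 2)) by (field; lra).
  assert (Hk : 2 * PI / INR N <= PI).
  { apply Rmult_le_reg_r with (INR N); [lra|]. unfold Rdiv. rewrite Rmult_assoc, Rinv_l by lra. nra. }
  pose proof (angle_step_pos N ltac:(lia)).
  split; [split; [apply Rmult_le_pos|apply Rmult_le_compat_l]|]; lra.
Qed.

Lemma angle_surj N t : (1 <= N)%nat -> 2 * PI / INR N < t <= 2 * PI + 2 * PI / INR N ->
  exists u, 1 < u <= INR N + 1 /\ angle N u = t.
Proof.
  intros HN Ht. assert (Hk := angle_step_pos N HN). assert (HNp := INR_pos N HN).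
  assert (HP := PI_RGT_0). exists (t * INR N / (2 * PI)).
  split; [|unfold angle; field; lra].
  assert (Hkt : 2 * PI / INR N * (t * INR N / (2 * PI)) = t) by (field; lra).
  assert (HkN : 2 * PI / INR N * (INR N + 1) = 2 * PI + 2 * PI / INR N) by (field; lra).
  split; [apply Rmult_lt_reg_l with (2 * PI / INR N) | apply Rmult_le_reg_l with (2 * PI / INR N)];
    lra.
Qed.

Lemma angle_fund_lift N t : (2 <= N)%nat -> 0 <= t < 2 * PI ->
  exists u, 1 < u <= INR N + 1 /\ (angle N u = t \/ angle N u = t + 2 * PI).
Proof.
  intros HN Ht. assert (Hk := angle_step_pos N ltac:(lia)).
  assert (Hr := angle_range N 0 HN ltac:(pose proof (pos_INR N); lra)).
  destruct (Rle_lt_dec t (2 * PI / INR N)).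
  - destruct (angle_surj N (t + 2 * PI) ltac:(lia) ltac:(lra)) as [u [Hu Ha]]. eauto.
  - destruct (angle_surj N t ltac:(lia) ltac:(lra)) as [u [Hu Ha]]. eauto.
Qed.

Lemma angle_fund_inj N u u' : (1 <= N)%nat -> 1 < u <= INR N + 1 -> 1 < u' <= INR N + 1 ->
  cos (angle N u - angle N u') = 1 -> u = u'.
Proof.
  intros HN Hu Hu' C. pose proof (angle_fund N u HN Hu). pose proof (angle_fund N u' HN Hu').
  apply cos_eq_1_small in C; [|lra].
  rewrite angle_sub in C by auto. apply Rmult_integral in C.
  pose proof (angle_step_pos N HN). destruct C; lra.
Qed.

Lemma angle_fund_close N u u' e eta : (1 <= N)%nat -> 1 < u <= INR N + 1 -> 1 < u' <= INR N + 1 ->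
  0 < eta <= PI -> eta <= 2 * PI / INR N * e -> cos (angle N u - angle N u') > cos eta ->
  (Rabs (angle N u - angle N u') < eta /\ Rabs (u - u') < e) \/
  (Rabs (angle N u - angle N (u' + INR N)) < eta /\ Rabs (u' + INR N - u) < e) \/
  (Rabs (angle N (u + INR N) - angle N u') < eta /\ Rabs (u + INR N - u') < e).
Proof.
  intros HN Hu Hu' Heta Heta2 Hcos.
  pose proof (angle_fund N u HN Hu). pose proof (angle_fund N u' HN Hu').
  rewrite !angle_add_N by auto.
  destruct (cos_gt_near_period (angle N u - angle N u') eta ltac:(lra) Heta Hcos) as [G|[G|G]].
  - left. split; auto. apply (angle_sub_lt N); auto; lra.
  - right; left. split; [replace (_ - _) with (angle N u - angle N u' - 2 * PI) by ring; auto|].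
    apply (angle_sub_lt N); auto. rewrite angle_add_N by auto.
    rewrite <- Rabs_Ropp. replace (- _) with (angle N u - angle N u' - 2 * PI) by ring. lra.
  - right; right. split; [replace (_ - _) with (angle N u - angle N u' + 2 * PI) by ring; auto|].
    apply (angle_sub_lt N); auto. rewrite angle_add_N by auto.
    replace (_ - _) with (angle N u - angle N u' + 2 * PI) by ring. lra.
Qed.

(** * The cylinder *)

Definition cyl_point (t h : R) : Rpoint :=
  fun i => match i with 0%nat => cos t | 1%nat => sin t | 2%nat => h | _ => 0 end.
Definition cyl_param (N : nat) (u h : R) : Rpoint := cyl_point (angle N u) h.

Lemma cyl_param_deck N : (1 <= N)%nat -> Nat.odd N = false -> deck_invariant N (cyl_param N).
Proof.
  intros HN Ho u h. unfold cyl_param. rewrite Ho, angle_add_N by auto. unfold cyl_point, flip_if.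
  apply functional_extensionality; intros [|[|[|i]]]; auto using cos_add_2PI, sin_add_2PI.
Qed.

Lemma cyl_param_lip N : (1 <= N)%nat -> lipschitz_param (cyl_param N).
Proof.
  intros HN. exists 8. split; [lra|]. intros u h u' h' _ _.
  pose proof (angle_lip N u u' HN). pose proof (Rabs_pos (h - h')). pose proof (Rabs_pos (u - u')).
  apply dist3_le_intro; [nra| | |]; unfold cyl_param, cyl_point.
  - eapply Rle_trans; [apply cos_lip|]. lra.
  - eapply Rle_trans; [apply sin_lip|]. lra.
  - lra.
Qed.

Lemma cos_sub_of_points t t' : cos (t - t') = 1 - ((cos t - cos t') ^ 2 + (sin t - sin t') ^ 2) / 2.
Proof.
  rewrite cos_minus. pose proof (sin2_cos2 t). pose proof (sin2_cos2 t'). unfold Rsqr in *. nra.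
Qed.

Lemma cyl_param_inj N u h u' h' : (1 <= N)%nat -> fund_domain N u h -> fund_domain N u' h' ->
  cyl_param N u h = cyl_param N u' h' -> u = u' /\ h = h'.
Proof.
  intros HN [Hu _] [Hu' _] E.
  assert (E0 := f_equal (fun y => y 0%nat) E). assert (E1 := f_equal (fun y => y 1%nat) E).
  assert (E2 := f_equal (fun y => y 2%nat) E). simpl in E0, E1, E2.
  split; auto. apply (angle_fund_inj N); auto.
  rewrite cos_sub_of_points, E0, E1. lra.
Qed.

Lemma cyl_param_near N : (1 <= N)%nat -> Nat.odd N = false -> deck_near_inverse N (cyl_param N).
Proof.
  intros HN Ho eps Heps.
  assert (Hk := angle_step_pos N HN). assert (HP := PI_RGT_0).
  set (eta := Rmin PI (2 * PI / INR N * eps)).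
  assert (Heta : 0 < eta <= PI) by (unfold eta; split; [apply Rmin_glb_lt; [lra|nra]|apply Rmin_l]).
  assert (Heta2 : eta <= 2 * PI / INR N * eps) by apply Rmin_r.
  assert (Hc := cos_lt_1 eta Heta).
  exists (Rmin eps (Rmin 1 (1 - cos eta))). split; [apply Rmin_glb_lt; [lra|apply Rmin_glb_lt; lra]|].
  intros u h u' h' [Hu Hh] [Hu' Hh'] Hd.
  set (d := Rmin eps (Rmin 1 (1 - cos eta))) in *.
  assert (D1 : d <= eps) by apply Rmin_l.
  assert (D2 : d <= 1) by (eapply Rle_trans; [apply Rmin_r|apply Rmin_l]).
  assert (D3 : d <= 1 - cos eta) by (eapply Rle_trans; [apply Rmin_r|apply Rmin_r]).
  destruct (dist3_lt_coords _ _ _ Hd) as [C0 [C1 C2]]. unfold cyl_param, cyl_point in C0, C1, C2.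
  apply Rabs_lt_sqr in C0. apply Rabs_lt_sqr in C1.
  assert (Hd0 : 0 < d) by (pose proof (Rabs_pos (h - h')); lra).
  assert (Hcos : cos (angle N u - angle N u') > cos eta) by (rewrite cos_sub_of_points; nra).
  rewrite Ho; unfold flip_if.
  destruct (angle_fund_close N u u' eps eta HN Hu Hu' Heta Heta2 Hcos) as [[_ G]|[[_ G]|[_ G]]].
  - left; split; lra.
  - right; left. split; [|rewrite Rabs_minus_sym]; lra.
  - right; right. split; lra.
Qed.

Lemma cyl_param_in N u h : 0 <= h <= 1 -> cylinder (cyl_param N u h).
Proof.
  intros Hh. unfold cylinder, cyl_param, cyl_point. split; [intros [|[|[|i]]] Hi; auto; lia|].
  split; auto. pose proof (sin2_cos2 (angle N u)). unfold Rsqr in H. lra.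
Qed.

Lemma cyl_param_onto N y : (2 <= N)%nat -> cylinder y ->
  exists u h, fund_domain N u h /\ y = cyl_param N u h.
Proof.
  intros HN (Hv & Hc & Hh).
  destruct (angle_of_unit (y 0%nat) (y 1%nat) Hc) as [t [Ht [E0 E1]]].
  destruct (angle_fund_lift N t HN Ht) as [u [Hu Ha]].
  exists u, (y 2%nat). split; [split; auto|].
  unfold cyl_param, cyl_point. apply functional_extensionality; intros [|[|[|i]]].
  - destruct Ha as [-> | ->]; rewrite ?cos_add_2PI; auto.
  - destruct Ha as [-> | ->]; rewrite ?sin_add_2PI; auto.
  - reflexivity.
  - apply Hv; lia.
Qed.

Theorem zigzag_cylinder N : (5 <= N)%nat -> Nat.odd N = false -> homeomorphic N (zigzag N) 3 cylinder.
Proof.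
  intros HN Ho. apply (zigzag_homeomorphic N (cyl_param N)); auto.
  - apply cyl_param_deck; auto; lia.
  - apply cyl_param_lip; lia.
  - intros; apply (cyl_param_inj N); auto; lia.
  - apply cyl_param_near; auto; lia.
  - intros; apply cyl_param_in; auto.
  - intros; apply cyl_param_onto; auto; lia.
Qed.

(** * The Möbius band *)

Definition mob_point (t s : R) : Rpoint :=
  fun i => match i with
  | 0%nat => (1 + s * cos (t / 2)) * cos t
  | 1%nat => (1 + s * cos (t / 2)) * sin t
  | 2%nat => s * sin (t / 2)
  | _ => 0 end.
Definition mob_param (N : nat) (u h : R) : Rpoint := mob_point (angle N u) (h - 1 / 2).

Lemma mob_point_turn t s : mob_point (t + 2 * PI) (- s) = mob_point t s.
Proof.
  unfold mob_point. replace ((t + 2 * PI) / 2) with (t / 2 + PI) by field.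
  rewrite neg_cos, neg_sin, cos_add_2PI, sin_add_2PI.
  apply functional_extensionality; intros [|[|[|i]]]; auto; ring.
Qed.

Lemma mob_param_deck N : (1 <= N)%nat -> Nat.odd N = true -> deck_invariant N (mob_param N).
Proof.
  intros HN Ho u h. unfold mob_param. rewrite Ho, angle_add_N by auto. unfold flip_if.
  replace (1 - h - 1 / 2) with (- (h - 1 / 2)) by lra. apply mob_point_turn.
Qed.

Lemma mob_radius_bounds s t : Rabs s <= 1 / 2 ->
  Rabs (s * cos (t / 2)) <= 1 / 2 /\ Rabs (s * sin (t / 2)) <= 1 / 2 /\
  1 / 2 <= 1 + s * cos (t / 2) <= 3 / 2.
Proof.
  intros Hs. rewrite !Rabs_mult.
  pose proof (Rabs_cos_le_1 (t / 2)). pose proof (Rabs_sin_le_1 (t / 2)).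
  pose proof (Rabs_pos s). pose proof (Rabs_pos (cos (t / 2))). pose proof (Rabs_pos (sin (t / 2))).
  assert (Rabs s * Rabs (cos (t / 2)) <= 1 / 2) by nra.
  split; [auto|split; [nra|]]. rewrite <- Rabs_mult in H4.
  revert H4. unfold Rabs; destruct Rcase_abs; lra.
Qed.

Lemma half_angle_lip t t' :
  Rabs (cos (t / 2) - cos (t' / 2)) <= Rabs (t - t') / 2 /\
  Rabs (sin (t / 2) - sin (t' / 2)) <= Rabs (t - t') / 2.
Proof.
  replace (Rabs (t - t') / 2) with (Rabs (t / 2 - t' / 2))
    by (replace (t / 2 - t' / 2) with ((t - t') / 2) by field; unfold Rdiv;
        rewrite Rabs_mult, (Rabs_pos_eq (/ 2)); lra).
  split; [apply cos_lip | apply sin_lip].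
Qed.

Lemma mob_point_lip t s t' s' : Rabs s <= 1 / 2 -> Rabs s' <= 1 / 2 ->
  dist 3 (mob_point t s) (mob_point t' s') <= Rabs (s - s') + 2 * Rabs (t - t').
Proof.
  intros Hs Hs'. destruct (half_angle_lip t t') as [Hc2 Hs2].
  destruct (mob_radius_bounds s' t' Hs') as [HB' [_ HA']].
  assert (HA : Rabs ((1 + s * cos (t / 2)) - (1 + s' * cos (t' / 2)))
                 <= Rabs (s - s') + Rabs (t - t') / 4).
  { replace (_ - _) with (s * cos (t / 2) - s' * cos (t' / 2)) by ring.
    eapply Rle_trans; [apply (Rabs_mul_sub_le _ _ _ _ 1 (1 / 2)); auto; apply Rabs_cos_le_1|].
    pose proof (Rabs_pos (s - s')). lra. }
  assert (HA'' : Rabs (1 + s' * cos (t' / 2)) <= 3 / 2) by (rewrite Rabs_pos_eq; lra).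
  pose proof (Rabs_pos (s - s')). pose proof (Rabs_pos (t - t')).
  apply dist3_le_intro; [lra| | |]; unfold mob_point.
  - eapply Rle_trans; [apply (Rabs_mul_sub_le _ _ _ _ 1 (3 / 2)); auto; apply Rabs_cos_le_1|].
    pose proof (cos_lip t t'). lra.
  - eapply Rle_trans; [apply (Rabs_mul_sub_le _ _ _ _ 1 (3 / 2)); auto; apply Rabs_sin_le_1|].
    pose proof (sin_lip t t'). lra.
  - eapply Rle_trans; [apply (Rabs_mul_sub_le _ _ _ _ 1 (1 / 2)); auto; apply Rabs_sin_le_1|]. lra.
Qed.

Lemma Rabs_sub_half h : 0 <= h <= 1 -> Rabs (h - 1 / 2) <= 1 / 2.
Proof. intros. unfold Rabs; destruct Rcase_abs; lra. Qed.

Lemma mob_param_lip N : (1 <= N)%nat -> lipschitz_param (mob_param N).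
Proof.
  intros HN. exists 16. split; [lra|]. intros u h u' h' Hh Hh'.
  unfold mob_param. eapply Rle_trans; [apply mob_point_lip; apply Rabs_sub_half; auto|].
  pose proof (angle_lip N u u' HN). replace (h - 1 / 2 - (h' - 1 / 2)) with (h - h') by lra.
  pose proof (Rabs_pos (h - h')). pose proof (Rabs_pos (u - u')). lra.
Qed.

Lemma mob_point_planar t1 s1 t2 s2 :
  (mob_point t1 s1 0%nat - mob_point t2 s2 0%nat) ^ 2
  + (mob_point t1 s1 1%nat - mob_point t2 s2 1%nat) ^ 2 =
  ((1 + s1 * cos (t1 / 2)) - (1 + s2 * cos (t2 / 2))) ^ 2
  + 2 * (1 + s1 * cos (t1 / 2)) * (1 + s2 * cos (t2 / 2)) * (1 - cos (t1 - t2)).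
Proof.
  unfold mob_point. set (A1 := 1 + s1 * cos (t1 / 2)). set (A2 := 1 + s2 * cos (t2 / 2)).
  rewrite cos_minus. pose proof (sin2_cos2 t1). pose proof (sin2_cos2 t2). unfold Rsqr in *.
  replace ((A1 * cos t1 - A2 * cos t2) ^ 2 + (A1 * sin t1 - A2 * sin t2) ^ 2) with
    ((A1 - A2) ^ 2 + 2 * A1 * A2 * (1 - (cos t1 * cos t2 + sin t1 * sin t2)) +
     A1 ^ 2 * (sin t1 * sin t1 + cos t1 * cos t1 - 1)
     + A2 ^ 2 * (sin t2 * sin t2 + cos t2 * cos t2 - 1)) by ring.
  rewrite H, H0. ring.
Qed.

Lemma mob_height_of_components t s :
  s = (s * cos (t / 2)) * cos (t / 2) + (s * sin (t / 2)) * sin (t / 2).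
Proof.
  pose proof (sin2_cos2 (t / 2)). unfold Rsqr in H.
  transitivity (s * (sin (t / 2) * sin (t / 2) + cos (t / 2) * cos (t / 2))); [rewrite H|]; ring.
Qed.

Lemma mob_point_eq t s t' s' : Rabs s <= 1 / 2 -> Rabs s' <= 1 / 2 ->
  mob_point t s = mob_point t' s' -> cos (t - t') = 1 /\ (t = t' -> s = s').
Proof.
  intros Hs Hs' E.
  assert (E0 := f_equal (fun y => y 0%nat) E). assert (E1 := f_equal (fun y => y 1%nat) E).
  assert (E2 := f_equal (fun y => y 2%nat) E). simpl in E0, E1, E2.
  destruct (mob_radius_bounds s t Hs) as [_ [_ HA]].
  destruct (mob_radius_bounds s' t' Hs') as [_ [_ HA']].
  pose proof (mob_point_planar t s t' s') as I. unfold mob_point in I at 1 2 3 4.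
  rewrite E0, E1, !Rminus_diag in I.
  set (A := 1 + s * cos (t / 2)) in *. set (A' := 1 + s' * cos (t' / 2)) in *.
  pose proof (COS_bound (t - t')).
  assert (T : 0 <= 2 * A * A' * (1 - cos (t - t')))
    by (apply Rmult_le_pos; [apply Rmult_le_pos|]; lra).
  assert (EA : A = A') by (pose proof (pow2_ge_0 (A - A')); nra).
  clear T.
  assert (C : cos (t - t') = 1).
  { rewrite EA, Rminus_diag in I.
    assert (Z : 2 * A' * A' * (1 - cos (t - t')) = 0) by lra.
    apply Rmult_integral in Z. destruct Z as [Z|Z]; [nra|lra]. }
  split; auto. intros <-.
  rewrite (mob_height_of_components t s), (mob_height_of_components t s').
  unfold A, A' in EA. replace (s * cos (t / 2)) with (s' * cos (t / 2)) by lra.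
  rewrite E2. reflexivity.
Qed.

Lemma mob_param_inj N u h u' h' : (1 <= N)%nat -> fund_domain N u h -> fund_domain N u' h' ->
  mob_param N u h = mob_param N u' h' -> u = u' /\ h = h'.
Proof.
  intros HN [Hu Hh] [Hu' Hh'] E.
  destruct (mob_point_eq _ _ _ _ (Rabs_sub_half h Hh) (Rabs_sub_half h' Hh') E) as [C Hs].
  assert (Euu : u = u') by (apply (angle_fund_inj N); auto).
  split; auto. subst u'. specialize (Hs eq_refl). lra.
Qed.

Lemma mob_point_cos_close t s t' s' d : Rabs s <= 1 / 2 -> Rabs s' <= 1 / 2 -> d <= 1 ->
  dist 3 (mob_point t s) (mob_point t' s') < d -> cos (t - t') > 1 - 4 * d.
Proof.
  intros Hs Hs' Hd1 Hd. destruct (dist3_lt_coords _ _ _ Hd) as [C0 [C1 _]].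
  apply Rabs_lt_sqr in C0. apply Rabs_lt_sqr in C1.
  assert (Hd0 : 0 < d) by (pose proof (dist_nonneg 3 (mob_point t s) (mob_point t' s')); lra).
  pose proof (mob_point_planar t s t' s') as I.
  destruct (mob_radius_bounds s t Hs) as [_ [_ HA]].
  destruct (mob_radius_bounds s' t' Hs') as [_ [_ HA']].
  set (A := 1 + s * cos (t / 2)) in *. set (A' := 1 + s' * cos (t' / 2)) in *.
  pose proof (COS_bound (t - t')). pose proof (pow2_ge_0 (A - A')).
  assert (A * A' >= 1 / 4) by nra. nra.
Qed.

Lemma mob_point_height_close t1 s1 t2 s2 d : Rabs s1 <= 1 / 2 -> Rabs s2 <= 1 / 2 ->
  dist 3 (mob_point t1 s1) (mob_point t2 s2) < d -> Rabs (s1 - s2) < 3 * d + Rabs (t1 - t2) / 2.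
Proof.
  intros Hs1 Hs2 Hd. destruct (dist3_lt_coords _ _ _ Hd) as [C0 [C1 C2]].
  pose proof (mob_point_planar t1 s1 t2 s2) as I.
  destruct (mob_radius_bounds s1 t1 Hs1) as [_ [_ HA1]].
  destruct (mob_radius_bounds s2 t2 Hs2) as [P2b [Q2b HA2]].
  pose proof (COS_bound (t1 - t2)).
  assert (Hd0 : 0 < d) by (pose proof (Rabs_pos (mob_point t1 s1 2%nat - mob_point t2 s2 2%nat)); lra).
  apply Rabs_lt_sqr in C0. apply Rabs_lt_sqr in C1.
  assert (HA : Rabs (s1 * cos (t1 / 2) - s2 * cos (t2 / 2)) < 2 * d).
  { replace (s1 * cos (t1 / 2) - s2 * cos (t2 / 2))
      with ((1 + s1 * cos (t1 / 2)) - (1 + s2 * cos (t2 / 2))) by ring.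
    assert (0 <= 2 * (1 + s1 * cos (t1 / 2)) * (1 + s2 * cos (t2 / 2)) * (1 - cos (t1 - t2)))
      by (apply Rmult_le_pos; [apply Rmult_le_pos|]; lra).
    set (D := 1 + s1 * cos (t1 / 2) - (1 + s2 * cos (t2 / 2))) in *.
    assert (Q : D ^ 2 < (2 * d) ^ 2) by nra.
    destruct (Rle_lt_dec (2 * d) (Rabs D)) as [G|G]; auto.
    rewrite <- (pow2_abs D) in Q. nra. }
  unfold mob_point in C2. destruct (half_angle_lip t1 t2) as [Hc2 Hs2'].
  rewrite (mob_height_of_components t1 s1), (mob_height_of_components t2 s2).
  pose proof (Rabs_mul_sub_le (s1 * cos (t1 / 2)) (cos (t1 / 2)) (s2 * cos (t2 / 2)) (cos (t2 / 2))
    1 (1 / 2) (Rabs_cos_le_1 _) P2b).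
  pose proof (Rabs_mul_sub_le (s1 * sin (t1 / 2)) (sin (t1 / 2)) (s2 * sin (t2 / 2)) (sin (t2 / 2))
    1 (1 / 2) (Rabs_sin_le_1 _) Q2b).
  replace (_ - _) with ((s1 * cos (t1 / 2) * cos (t1 / 2) - s2 * cos (t2 / 2) * cos (t2 / 2)) +
    (s1 * sin (t1 / 2) * sin (t1 / 2) - s2 * sin (t2 / 2) * sin (t2 / 2))) by ring.
  eapply Rle_lt_trans; [apply Rabs_triang|]. lra.
Qed.

Lemma mob_param_near N : (1 <= N)%nat -> Nat.odd N = true -> deck_near_inverse N (mob_param N).
Proof.
  intros HN Ho eps Heps.
  assert (Hk := angle_step_pos N HN). assert (HP := PI_RGT_0).
  set (eta := Rmin PI (Rmin (2 * PI / INR N * eps) eps)).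
  assert (Heta : 0 < eta <= PI)
    by (unfold eta; split; [apply Rmin_glb_lt; [lra|apply Rmin_glb_lt; nra]|apply Rmin_l]).
  assert (Heta2 : eta <= 2 * PI / INR N * eps) by (eapply Rle_trans; [apply Rmin_r|apply Rmin_l]).
  assert (Heta3 : eta <= eps) by (eapply Rle_trans; [apply Rmin_r|apply Rmin_r]).
  assert (Hc := cos_lt_1 eta Heta).
  exists (Rmin (eps / 6) (Rmin 1 ((1 - cos eta) / 4))).
  split; [apply Rmin_glb_lt; [lra|apply Rmin_glb_lt; lra]|].
  intros u h u' h' [Hu Hh] [Hu' Hh'] Hd.
  set (d := Rmin (eps / 6) (Rmin 1 ((1 - cos eta) / 4))) in *.
  assert (D1 : d <= eps / 6) by apply Rmin_l.
  assert (D2 : d <= 1) by (eapply Rle_trans; [apply Rmin_r|apply Rmin_l]).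
  assert (D3 : d <= (1 - cos eta) / 4) by (eapply Rle_trans; [apply Rmin_r|apply Rmin_r]).
  unfold mob_param in Hd.
  assert (Hs := Rabs_sub_half h Hh). assert (Hs' := Rabs_sub_half h' Hh').
  assert (Hcos : cos (angle N u - angle N u') > cos eta)
    by (pose proof (mob_point_cos_close _ _ _ _ d Hs Hs' D2 Hd); lra).
  rewrite Ho; unfold flip_if.
  destruct (angle_fund_close N u u' eps eta HN Hu Hu' Heta Heta2 Hcos) as [[G1 G2]|[[G1 G2]|[G1 G2]]].
  - left. split; auto.
    pose proof (mob_point_height_close _ _ _ _ d Hs Hs' Hd).
    replace (h - h') with (h - 1 / 2 - (h' - 1 / 2)) by lra. lra.
  - right; left. split; auto.
    rewrite <- (mob_point_turn (angle N u') (h' - 1 / 2)), <- angle_add_N in Hd by auto.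
    assert (Rabs (- (h' - 1 / 2)) <= 1 / 2) by (rewrite Rabs_Ropp; auto).
    pose proof (mob_point_height_close _ _ _ _ d Hs H Hd).
    rewrite <- Rabs_Ropp. replace (- (1 - h' - h)) with (h - 1 / 2 - - (h' - 1 / 2)) by lra. lra.
  - right; right. split; auto.
    rewrite <- (mob_point_turn (angle N u) (h - 1 / 2)), <- angle_add_N in Hd by auto.
    assert (Rabs (- (h - 1 / 2)) <= 1 / 2) by (rewrite Rabs_Ropp; auto).
    pose proof (mob_point_height_close _ _ _ _ d H Hs' Hd).
    replace (1 - h - h') with (- (h - 1 / 2) - (h' - 1 / 2)) by lra. lra.
Qed.

Lemma mob_point_in t s : 0 <= t <= 2 * PI -> - (1 / 2) <= s <= 1 / 2 -> mobius_band (mob_point t s).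
Proof.
  intros Ht Hs. split; [intros [|[|[|i]]] Hi; auto; lia|].
  exists t, s. repeat split; try lra; reflexivity.
Qed.

Lemma mob_param_in N u h : (2 <= N)%nat -> 0 <= u <= INR N + 2 -> 0 <= h <= 1 ->
  mobius_band (mob_param N u h).
Proof.
  intros HN Hu Hh. destruct (angle_range N u HN Hu) as [Ht Hk]. unfold mob_param.
  destruct (Rle_lt_dec (angle N u) (2 * PI)).
  - apply mob_point_in; lra.
  - replace (angle N u) with ((angle N u - 2 * PI) + 2 * PI) by ring.
    replace (h - 1 / 2) with (- (1 / 2 - h)) by lra. rewrite mob_point_turn.
    apply mob_point_in; lra.
Qed.

Lemma mob_param_onto N y : (2 <= N)%nat -> mobius_band y ->
  exists u h, fund_domain N u h /\ y = mob_param N u h.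
Proof.
  intros HN [Hv [t [s [Ht [Hs [E0 [E1 E2]]]]]]].
  assert (Hy : y = mob_point t s).
  { apply functional_extensionality; intros [|[|[|i]]]; auto. apply Hv; lia. }
  subst y. assert (HP := PI_RGT_0).
  assert (Hred : exists t' s', 0 <= t' < 2 * PI /\ - (1 / 2) <= s' <= 1 / 2 /\
                               mob_point t s = mob_point t' s').
  { destruct (Req_dec t (2 * PI)) as [->|Hne].
    - exists 0, (- s). split; [lra|split; [lra|]].
      rewrite <- (mob_point_turn 0 (- s)), Rplus_0_l, Ropp_involutive. reflexivity.
    - exists t, s. split; [lra|auto]. }
  destruct Hred as (t' & s' & Ht' & Hs' & ->).
  destruct (angle_fund_lift N t' HN Ht') as [u [Hu [Ha|Ha]]].
  - exists u, (s' + 1 / 2). split; [split; [auto|lra]|].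
    unfold mob_param. rewrite Ha. f_equal. lra.
  - exists u, (1 / 2 - s'). split; [split; [auto|lra]|].
    unfold mob_param. rewrite Ha. replace (1 / 2 - s' - 1 / 2) with (- s') by lra.
    symmetry; apply mob_point_turn.
Qed.

Theorem zigzag_mobius N : (5 <= N)%nat -> Nat.odd N = true -> homeomorphic N (zigzag N) 3 mobius_band.
Proof.
  intros HN Ho. apply (zigzag_homeomorphic N (mob_param N)); auto.
  - apply mob_param_deck; auto; lia.
  - apply mob_param_lip; lia.
  - intros; apply (mob_param_inj N); auto; lia.
  - apply mob_param_near; auto; lia.
  - intros; apply mob_param_in; auto; lia.
  - intros; apply mob_param_onto; auto; lia.
Qed.

(** * Relabelling vertices *)

Definition relabel (N : nat) (pi : nat -> nat) (x : Rpoint) : Rpoint :=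
  fun i => if (i <? N)%nat then x (pi i) else 0.

Lemma relabel_high N pi x i : (N <= i)%nat -> relabel N pi x i = 0.
Proof. intros; unfold relabel; destruct (Nat.ltb_spec i N); [lia|auto]. Qed.

Lemma relabel_nonneg N pi x : (forall i, 0 <= x i) -> forall i, 0 <= relabel N pi x i.
Proof. intros Hx i. unfold relabel. destruct (i <? N)%nat; [auto|lra]. Qed.

Lemma homeomorphic_relabel N (A B : Rpoint -> Prop) pi sg :
  (forall i, (i < N)%nat -> (pi i < N)%nat) -> (forall i, (i < N)%nat -> (sg i < N)%nat) ->
  (forall i, (i < N)%nat -> pi (sg i) = i) -> (forall i, (i < N)%nat -> sg (pi i) = i) ->
  (forall x, A x -> B (relabel N pi x)) -> (forall y, B y -> A (relabel N sg y)) ->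
  (forall x, A x -> forall i, (N <= i)%nat -> x i = 0) ->
  (forall y, B y -> forall i, (N <= i)%nat -> y i = 0) ->
  homeomorphic N A N B.
Proof.
  intros Hpi Hsg Hps Hsp HA HB VA VB.
  assert (Hinv : forall p s (C : Rpoint -> Prop), (forall i, (i < N)%nat -> (s i < N)%nat) ->
    (forall i, (i < N)%nat -> p (s i) = i) -> (forall x, C x -> forall i, (N <= i)%nat -> x i = 0) ->
    forall x, C x -> relabel N s (relabel N p x) = x).
  { intros p s C Hs Hps' VC x Hx. apply functional_extensionality; intros i. unfold relabel.
    destruct (Nat.ltb_spec i N); [|symmetry; apply (VC x); auto].
    destruct (Nat.ltb_spec (s i) N); [rewrite Hps'; auto | specialize (Hs i H); lia]. }
  assert (Hcont : forall p (C : Rpoint -> Prop), (forall i, (i < N)%nat -> (p i < N)%nat) ->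
    cont_on N N C (relabel N p)).
  { intros p C Hp x Hx eps He. exists eps. split; auto. intros y Hy Hd.
    eapply Rle_lt_trans; [|exact Hd]. apply dist_le_intro; [apply dist_nonneg|].
    intros i Hi. unfold relabel. destruct (Nat.ltb_spec i N); [|lia]. apply dist_coord_le; auto. }
  exists (relabel N pi), (relabel N sg).
  split; [|split; [|split; [|split; [|split]]]]; eauto.
Qed.

Lemma relabel_three N pi sg x a b c :
  (forall i, (i < N)%nat -> (pi i < N)%nat) -> (forall i, (i < N)%nat -> (sg i < N)%nat) ->
  (forall i, (i < N)%nat -> pi (sg i) = i) -> (forall i, (i < N)%nat -> sg (pi i) = i) ->
  (a < N)%nat -> (b < N)%nat -> (c < N)%nat ->
  (a <> b)%nat -> (a <> c)%nat -> (b <> c)%nat ->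
  (forall j, (j < N)%nat -> x j <> 0 -> j = a \/ j = b \/ j = c) ->
  (forall j, (j < N)%nat -> relabel N pi x j <> 0 -> j = sg a \/ j = sg b \/ j = sg c) /\
  sumR N (relabel N pi x) = sumR N x.
Proof.
  intros Hpi Hsg Hps Hsp Ha Hb Hc Hab Hac Hbc Hx.
  assert (Hsupp : forall j, (j < N)%nat -> relabel N pi x j <> 0 -> j = sg a \/ j = sg b \/ j = sg c).
  { intros j Hj Hnz. unfold relabel in Hnz. destruct (Nat.ltb_spec j N); [|lia].
    rewrite <- (Hsp j Hj). destruct (Hx (pi j) (Hpi j Hj) Hnz) as [E|[E|E]]; rewrite E; auto. }
  split; auto.
  assert (Hinj : forall i i', (i < N)%nat -> (i' < N)%nat -> i <> i' -> sg i <> sg i').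
  { intros i i' Hi Hi' Hne E. apply Hne. rewrite <- (Hps i Hi), <- (Hps i' Hi'), E. reflexivity. }
  rewrite (sumR_three N _ (sg a) (sg b) (sg c)); auto.
  rewrite (sumR_three N x a b c); auto.
  unfold relabel. rewrite !(proj2 (Nat.ltb_lt _ _)), !Hps; auto.
Qed.

Definition stride_zigzag (N d : nat) (x : Rpoint) : Prop :=
  (forall i, (N <= i)%nat -> x i = 0) /\ (forall i, 0 <= x i) /\ sumR N x = 1 /\
  exists a, (a < N)%nat /\ forall j, (j < N)%nat -> x j <> 0 ->
    j = a \/ j = (a + d) mod N \/ j = (a + 2 * d) mod N.

Section Stride.

Variables N d e b : nat.
Hypothesis N_ge3 : (3 <= N)%nat.
Hypothesis bezout : (e * d = b * N + 1)%nat.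

Definition scale (m i : nat) : nat := ((i * m) mod N)%nat.

Lemma scale_bound m i : (scale m i < N)%nat.
Proof. apply mod_bound; lia. Qed.

Lemma scale_ed_mod i : ((i * d * e) mod N = i mod N)%nat.
Proof. replace (i * d * e)%nat with (i + (i * b) * N)%nat by nia. apply Nat.Div0.mod_add. Qed.

Lemma scale_d_e i : (i < N)%nat -> scale d (scale e i) = i.
Proof.
  intros Hi. unfold scale. rewrite Nat.Div0.mul_mod_idemp_l.
  replace (i * e * d)%nat with (i * d * e)%nat by ring. rewrite scale_ed_mod. apply Nat.mod_small; auto.
Qed.

Lemma scale_e_d i : (i < N)%nat -> scale e (scale d i) = i.
Proof.
  intros Hi. unfold scale. rewrite Nat.Div0.mul_mod_idemp_l, scale_ed_mod. apply Nat.mod_small; auto.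
Qed.

Lemma scale_d_shift i r : scale d ((i + r) mod N) = ((scale d i + r * d) mod N)%nat.
Proof.
  unfold scale. rewrite Nat.Div0.mul_mod_idemp_l, Nat.Div0.add_mod_idemp_l. f_equal. ring.
Qed.

Lemma scale_e_shift a r : scale e ((a + r * d) mod N) = ((scale e a + r) mod N)%nat.
Proof.
  unfold scale. rewrite Nat.Div0.mul_mod_idemp_l, Nat.Div0.add_mod_idemp_l.
  replace ((a + r * d) * e)%nat with (a * e + r + (r * b) * N)%nat by nia.
  apply Nat.Div0.mod_add.
Qed.

Lemma stride_to_zigzag x : stride_zigzag N d x -> zigzag N (relabel N (scale d) x).
Proof.
  intros (Hv & Hp & Hs & a & Ha & Hx).
  set (i := scale e a). assert (Hi : (i < N)%nat) by apply scale_bound.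
  assert (S0 : scale e a = i) by reflexivity.
  assert (S1 : scale e ((a + d) mod N) = ((i + 1) mod N)%nat)
    by (rewrite <- (Nat.mul_1_l d) at 1; apply scale_e_shift).
  assert (S2 : scale e ((a + 2 * d) mod N) = ((i + 2) mod N)%nat) by apply scale_e_shift.
  destruct (tri_vertices_distinct N i N_ge3) as [D1 [D2 D3]].
  rewrite (Nat.mod_small i N Hi) in D1, D2.
  destruct (relabel_three N (scale d) (scale e) x a ((a + d) mod N) ((a + 2 * d) mod N))
    as [Hsupp Hsum]; auto using scale_bound, scale_d_e, scale_e_d;
    try (apply mod_bound; lia); try (intro E; congruence).
  split; [|split; [|split]].
  - apply relabel_high.
  - apply relabel_nonneg; auto.
  - rewrite Hsum; auto.
  - exists i. split; auto. intros j Hj Hnz. rewrite (Nat.mod_small i N Hi).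
    fold i in Hsupp. rewrite <- S1, <- S2. auto.
Qed.

Lemma zigzag_to_stride y : zigzag N y -> stride_zigzag N d (relabel N (scale e) y).
Proof.
  intros (Hv & Hp & Hs & i & Hi & Hy).
  set (a := scale d i). assert (Ha : (a < N)%nat) by apply scale_bound.
  assert (S1 : scale d ((i + 1) mod N) = ((a + d) mod N)%nat)
    by (rewrite scale_d_shift, Nat.mul_1_l; reflexivity).
  assert (S2 : scale d ((i + 2) mod N) = ((a + 2 * d) mod N)%nat) by apply scale_d_shift.
  destruct (tri_vertices_distinct N i N_ge3) as [D1 [D2 D3]].
  unfold tri_support in Hy. rewrite (Nat.mod_small i N Hi) in *.
  destruct (relabel_three N (scale e) (scale d) y i ((i + 1) mod N) ((i + 2) mod N))
    as [Hsupp Hsum]; auto using scale_bound, scale_d_e, scale_e_d; try (apply mod_bound; lia).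
  split; [|split; [|split]].
  - apply relabel_high.
  - apply relabel_nonneg; auto.
  - rewrite Hsum; auto.
  - exists a. split; auto. rewrite <- S1, <- S2. auto.
Qed.

Lemma stride_zigzag_homeomorphic : homeomorphic N (stride_zigzag N d) N (zigzag N).
Proof.
  apply (homeomorphic_relabel N _ _ (scale d) (scale e));
    auto using scale_bound, scale_d_e, scale_e_d, stride_to_zigzag, zigzag_to_stride.
  - intros x (Hv & _). auto.
  - intros y (Hv & _). auto.
Qed.

End Stride.

Lemma stride_zigzag_models N d : (5 <= N)%nat -> (0 < d)%nat -> Nat.gcd d N = 1%nat ->
  (Nat.Even N -> homeomorphic N (stride_zigzag N d) 3 cylinder) /\
  (Nat.Odd N -> homeomorphic N (stride_zigzag N d) 3 mobius_band).
Proof.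
  intros HN Hd Hg. destruct (Nat.gcd_bezout_pos d N Hd) as [e [b Hb]]. rewrite Hg in Hb.
  assert (HS := stride_zigzag_homeomorphic N d e b ltac:(lia) ltac:(lia)).
  split; intros HE; eapply homeomorphic_trans; eauto.
  - apply zigzag_cylinder; auto.
    apply Nat.even_spec in HE. rewrite <- Nat.negb_even, HE. reflexivity.
  - apply zigzag_mobius; auto. apply Nat.odd_spec; auto.
Qed.

(* In C(n, n, n+k) every triangle is [{a, a+n, a+2n}] and the edge [{a, a+n+k}]
   lies in the triangle ending at [a]. *)
Lemma realization_a_stride n k x : (0 < n)%nat -> (0 < k)%nat ->
  (realization n n (n + k) x <-> stride_zigzag (3 * n + k) n x).
Proof.
  intros Hn Hk. unfold realization, in_simplex, stride_zigzag. cbv zeta.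
  replace (n + n + (n + k))%nat with (3 * n + k)%nat by lia. set (N := (3 * n + k)%nat).
  assert (HN0 : (0 < N)%nat) by (unfold N; lia).
  assert (Hk0 : forall k0, (k0 < N)%nat -> ((k0 + N) mod N = k0)%nat)
    by (intros; rewrite mod_add_modulus; apply Nat.mod_small; auto).
  split; intros (Hv & Hp & Hs & Hsimp); split; auto; split; auto; split; auto.
  - destruct Hsimp as [k0 [Hk0N [C|[C|[C|[C|C]]]]]].
    + exists k0. split; auto. intros j Hj Hx.
      replace (k0 + 2 * n)%nat with (k0 + n + n)%nat by lia. auto.
    + exists ((k0 + N - n - n) mod N)%nat. split; [apply mod_bound; auto|].
      intros j Hj Hx. rewrite !Nat.Div0.add_mod_idemp_l. destruct (C j (conj Hj Hx)) as [E|[E|E]].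
      * right; right. replace (k0 + N - n - n + 2 * n)%nat with (k0 + N)%nat by (unfold N in *; lia).
        rewrite Hk0; auto.
      * right; left. rewrite E. f_equal. unfold N in *; lia.
      * left; auto.
    + exists k0. split; auto. intros j Hj Hx. destruct (C j (conj Hj Hx)) as [E|E]; auto.
    + exists k0. split; auto. intros j Hj Hx. destruct (C j (conj Hj Hx)) as [E|E]; auto.
    + exists ((k0 + (n + k)) mod N)%nat. split; [apply mod_bound; auto|].
      intros j Hj Hx. rewrite !Nat.Div0.add_mod_idemp_l. destruct (C j (conj Hj Hx)) as [E|E].
      * right; right. replace (k0 + (n + k) + 2 * n)%nat with (k0 + N)%nat by (unfold N in *; lia).
        rewrite Hk0; auto.
      * left; auto.
  - destruct Hsimp as [a [Ha Hc]]. exists a. split; auto. left.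
    intros j [Hj Hx]. replace (a + n + n)%nat with (a + 2 * n)%nat by lia. auto.
Qed.

(* In C(n, n+k, n+k) the triangle [{a, a+n, a+2n+k}] is [{a+n, a+n+d, a+n+2d}] with
   [d = n + k], since [a + n + 2d = a + N]. *)
Lemma realization_b_stride n k x : (0 < n)%nat -> (0 < k)%nat ->
  (realization n (n + k) (n + k) x <-> stride_zigzag (3 * n + 2 * k) (n + k) x).
Proof.
  intros Hn Hk. unfold realization, in_simplex, stride_zigzag. cbv zeta.
  replace (n + (n + k) + (n + k))%nat with (3 * n + 2 * k)%nat by lia. set (N := (3 * n + 2 * k)%nat).
  assert (HN0 : (0 < N)%nat) by (unfold N; lia).
  assert (Hk0 : forall k0, (k0 < N)%nat -> ((k0 + N) mod N = k0)%nat)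
    by (intros; rewrite mod_add_modulus; apply Nat.mod_small; auto).
  split; intros (Hv & Hp & Hs & Hsimp); split; auto; split; auto; split; auto.
  - destruct Hsimp as [k0 [Hk0N [C|[C|[C|[C|C]]]]]].
    + exists ((k0 + n) mod N)%nat. split; [apply mod_bound; auto|].
      intros j Hj Hx. rewrite !Nat.Div0.add_mod_idemp_l. destruct (C j (conj Hj Hx)) as [E|[E|E]].
      * right; right. replace (k0 + n + 2 * (n + k))%nat with (k0 + N)%nat by (unfold N in *; lia).
        rewrite Hk0; auto.
      * left; auto.
      * right; left. auto.
    + exists k0. split; auto. intros j Hj Hx. destruct (C j (conj Hj Hx)) as [E|[E|E]].
      * left; auto.
      * right; right. rewrite E. f_equal. unfold N in *; lia.
      * right; left. rewrite E. f_equal. unfold N in *; lia.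
    + exists ((k0 + n) mod N)%nat. split; [apply mod_bound; auto|].
      intros j Hj Hx. rewrite !Nat.Div0.add_mod_idemp_l. destruct (C j (conj Hj Hx)) as [E|E].
      * right; right. replace (k0 + n + 2 * (n + k))%nat with (k0 + N)%nat by (unfold N in *; lia).
        rewrite Hk0; auto.
      * left; auto.
    + exists k0. split; auto. intros j Hj Hx. destruct (C j (conj Hj Hx)) as [E|E]; auto.
    + exists k0. split; auto. intros j Hj Hx. destruct (C j (conj Hj Hx)) as [E|E]; auto.
  - destruct Hsimp as [a [Ha Hc]]. exists a. split; auto. right; left.
    intros j [Hj Hx]. destruct (Hc j Hj Hx) as [E|[E|E]].
    + left; auto.
    + right; right. rewrite E. f_equal. unfold N in *; lia.
    + right; left. rewrite E. f_equal. unfold N in *; lia.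
Qed.

Lemma gcd_n_3n_plus_k n k : Nat.gcd n k = 1%nat -> Nat.gcd n (3 * n + k) = 1%nat.
Proof.
  intros H. replace (3 * n + k)%nat with (k + 3 * n)%nat by lia.
  rewrite Nat.gcd_add_mult_diag_r. auto.
Qed.

Lemma gcd_n_plus_k_3n_plus_2k n k : Nat.gcd n k = 1%nat -> Nat.gcd (n + k) (3 * n + 2 * k) = 1%nat.
Proof.
  intros H. replace (3 * n + 2 * k)%nat with (n + 2 * (n + k))%nat by lia.
  rewrite Nat.gcd_add_mult_diag_r, Nat.gcd_comm.
  replace (n + k)%nat with (k + 1 * n)%nat by lia. rewrite Nat.gcd_add_mult_diag_r. auto.
Qed.

Theorem theorem6p10 (n k : nat) (hn : (0 < n)%nat) (hk : (0 < k)%nat)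
  (hgcd : Nat.gcd n k = 1%nat) :
  ( let N := (3 * n + k)%nat in
    (2 * (n + k) <> N)%nat ->
    (Nat.Even N -> homeomorphic N (realization n n (n + k)) 3 cylinder) /\
    (Nat.Odd N -> homeomorphic N (realization n n (n + k)) 3 mobius_band) ) /\
  ( let N := (3 * n + 2 * k)%nat in
    (Nat.Even N -> homeomorphic N (realization n (n + k) (n + k)) 3 cylinder) /\
    (Nat.Odd N -> homeomorphic N (realization n (n + k) (n + k)) 3 mobius_band) ).
Proof.
  split.
  - (* [2 (n + k) <> N] only rules out [n = k = 1], i.e. [N = 4]. *)
    intros N Hne.
    assert (HN : (5 <= N)%nat) by (unfold N in *; lia).
    assert (HR : forall x, stride_zigzag N n x <-> realization n n (n + k) x)
      by (intro x; symmetry; apply realization_a_stride; auto).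
    destruct (stride_zigzag_models N n HN hn (gcd_n_3n_plus_k n k hgcd)) as [Hc Hm].
    split; intros HE; eapply homeomorphic_ext_l; eauto.
  - intros N. assert (HN : (5 <= N)%nat) by (unfold N; lia).
    assert (HR : forall x, stride_zigzag N (n + k) x <-> realization n (n + k) (n + k) x)
      by (intro x; symmetry; apply realization_b_stride; auto).
    destruct (stride_zigzag_models N (n + k) HN ltac:(lia) (gcd_n_plus_k_3n_plus_2k n k hgcd))
      as [Hc Hm].
    split; intros HE; eapply homeomorphic_ext_l; eauto.
Qed.
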